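(* Let $\tau$ be an untwisted skew product with group component $\mathbb Z^d$, height function $h$, and base shift a transitive subshift of finite type $(\Sigma,\sigma)$. For any surjective homomorphism $L:\mathbb Z^d\to\mathbb Z$ there exists $C>0$ such that: if there are $s\in\Sigma$ and $n>0$ with $L(h(s,n))>C$, then there is a periodic point $s'$ (of some period $n'$) with $\hat L(\mathrm{rot}(s'))>0$; and if there are $s$, $n>0$ with $L(h(s,n))<-C$, then there is a point $s''$ with $\hat L(\mathrm{rot}(s''))<0$. Consequently, $0\in\mathrm{Int}(\mathrm{rot}(\tau))$ if and only if for every surjective homomorphism $L:\mathbb Z^d\to\mathbb Z$, $\sup\{L(h(s,m)):s\in\Sigma,\ m\in\mathbb N\}=\infty$.
   Context: Subshift of finite type $(\Sigma,\sigma)$: finite state set, $\{0,1\}$ transition matrix, $\Sigma$ the bi-infinite allowed sequences, $\sigma$ left shift; transitive means any state can reach any other through an allowed word. Untwisted skew product: $\tau(s,n)=(\sigma s,n+h(s))$, $h:\Sigma\to\mathbb Z^d$ depending only on $(s_0,s_1)$. $h(s,n)=\sum_{i=0}^{n-1}h(\sigma^is)$; $\mathrm{rot}(s)=\lim_{n\to\infty}h(s,n)/n$ when it exists; $\mathrm{rot}(\tau)$ the set of all rotation vectors, interior in $\mathbb R^d$. $\hat L:\mathbb R^d\to\mathbb R$ is the linear extension of $L$. *)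

From Stdlib Require Import Reals ZArith Arith.
Open Scope R_scope.

(* States of the SFT are 0..k-1; A is the {0,1} transition matrix. *)
(* Elements of Z^d are represented by vecZ := nat -> Z, only coordinates i<d
   being meaningful; similarly R^d by nat -> R. *)
Definition vecZ := nat -> Z.
Definition vecR := nat -> R.

Definition inSigma (k : nat) (A : nat -> nat -> bool) (s : Z -> nat) : Prop :=
  forall i : Z, (s i < k)%nat /\ A (s i) (s (i + 1)%Z) = true.

Definition transitive_SFT (k : nat) (A : nat -> nat -> bool) : Prop :=
  forall i j : nat, (i < k)%nat -> (j < k)%nat ->
    exists (n : nat) (p : nat -> nat),
      (1 <= n)%nat /\ p O = i /\ p n = j /\
      (forall m, (m <= n)%nat -> (p m < k)%nat) /\
      (forall m, (m < n)%nat -> A (p m) (p (S m)) = true).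

(* Birkhoff sum h(s,n) = sum_{j<n} h(sigma^j s), with h(s) = h(s_0,s_1) *)
Fixpoint hsum (h : nat -> nat -> vecZ) (s : Z -> nat) (n : nat) : vecZ :=
  match n with
  | O => fun _ => 0%Z
  | S n' => fun i => (hsum h s n' i + h (s (Z.of_nat n')) (s (Z.of_nat n' + 1)%Z) i)%Z
  end.

Definition has_rot (d : nat) (h : nat -> nat -> vecZ) (s : Z -> nat) (x : vecR) : Prop :=
  forall i, (i < d)%nat -> Un_cv (fun n => IZR (hsum h s n i) / INR n) (x i).

Definition rot_set (d k : nat) (A : nat -> nat -> bool) (h : nat -> nat -> vecZ) (x : vecR) : Prop :=
  exists s, inSigma k A s /\ has_rot d h s x.

Definition in_interior (d : nat) (P : vecR -> Prop) (x : vecR) : Prop :=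
  exists eps, eps > 0 /\
    forall y : vecR, (forall i, (i < d)%nat -> Rabs (y i - x i) < eps) -> P y.

Definition is_hom (d : nat) (L : vecZ -> Z) : Prop :=
  (forall u v : vecZ, (forall i, (i < d)%nat -> u i = v i) -> L u = L v) /\
  (forall u v : vecZ, L (fun i => (u i + v i)%Z) = (L u + L v)%Z).

Definition surjZ (L : vecZ -> Z) : Prop := forall z : Z, exists v, L v = z.

Definition unitZ (i : nat) : vecZ := fun j => if Nat.eqb j i then 1%Z else 0%Z.

Fixpoint sum_lt (n : nat) (f : nat -> R) : R :=
  match n with O => 0 | S n' => sum_lt n' f + f n' end.

Definition Lhat (d : nat) (L : vecZ -> Z) (x : vecR) : R :=
  sum_lt d (fun i => IZR (L (unitZ i)) * x i).

Definition periodic (s : Z -> nat) (n : nat) : Prop :=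
  forall m : Z, s (m + Z.of_nat n)%Z = s m.

From Stdlib Require Import Reals ZArith Znumtheory Bool Lia Lra List
  FunctionalExtensionality Classical.
Import ListNotations.

(* An orbit segment s_0 ... s_n of the shift is a walk of length n in the
   transition graph, and h(s,n) is the sum of h over the edges of this walk.

   A walk longer than the number k of states repeats a
      state, so a loop can be cut out of it.  Cutting loops out repeatedly
      shows: if L(h(s,n)) exceeds C = k * (sum of |L(h(a,b))| over edges),
      then some loop of length <= k has positive L-weight.  The periodic point
      running around a loop has as rotation vector its displacement divided by
      its length, which gives the first half of the theorem.

   Given loops F_j at a common state and
      weights lam_j >= 0 with sum_j lam_j |F_j| = 1, a greedy schedule
      concatenates the loops so that after t blocks loop j has been used
      rho_j t times up to an error of at most m.  The resulting point has rotation
      vector sum_j lam_j disp(F_j).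

   3. The characterisation of 0 in Int rot(tau).  (=>) A point with rotation
      vector x satisfies L(h(s,n)) ~ n Lhat(x), so choosing x in the ball with
      Lhat(x) > 0 makes L(h(s,n)) unbounded.  (<=) By part 1 every nonzero
      integer functional is positive on the displacement of some short loop;
      Fourier-Motzkin elimination shows that every integer vector then has a
      positive multiple in the integer cone of these displacements; using
      transitivity the loops are glued into one loop at state 0 with
      displacement M b.  Loops with displacements M e_i, -M e_i and 0 realise,
      by part 2, every vector of a small ball around 0. *)

Fixpoint walk (k : nat) (A : nat -> nat -> bool) (x : nat) (l : list nat) : Prop :=
  match l with
  | [] => (x < k)%nat
  | y :: l' => (x < k)%nat /\ A x y = true /\ walk k A y l'
  end.

Fixpoint walk_weight (w : nat -> nat -> Z) (x : nat) (l : list nat) : Z :=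
  match l with
  | [] => 0%Z
  | y :: l' => (w x y + walk_weight w y l')%Z
  end.

Definition loop (k : nat) (A : nat -> nat -> bool) (x : nat) (l : list nat) : Prop :=
  walk k A x l /\ (1 <= length l)%nat /\ last l x = x.

Lemma walk_start k A x l : walk k A x l -> (x < k)%nat.
Proof. destruct l; simpl; tauto. Qed.

Lemma last_cons' {X} (l : list X) x y : last (y :: l) x = last l y.
Proof.
  revert x y; induction l as [|a l IH]; intros x y; [reflexivity|].
  change (last (a :: l) x = last (a :: l) y). rewrite !IH. reflexivity.
Qed.

Lemma last_app {X} (l1 l2 : list X) x : last (l1 ++ l2) x = last l2 (last l1 x).
Proof.
  revert x; induction l1 as [|a l1 IH]; intros x; [reflexivity|].
  rewrite <- app_comm_cons, !last_cons'. apply IH.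
Qed.

Lemma last_firstn (l : list nat) i x : (i <= length l)%nat -> last (firstn i l) x = nth i (x :: l) 0%nat.
Proof.
  revert i x; induction l as [|a l IH]; intros [|i] x H; try reflexivity; [simpl in H; lia|].
  cbn [firstn]. rewrite last_cons', IH by (simpl in H; lia). reflexivity.
Qed.

Lemma firstn_add {X} (l : list X) i m : firstn (i + m) l = firstn i l ++ firstn m (skipn i l).
Proof.
  revert l; induction i as [|i IH]; intros [|a l]; simpl; auto.
  - rewrite firstn_nil; auto.
  - f_equal; auto.
Qed.

Lemma walk_app k A x l1 l2 : walk k A x (l1 ++ l2) <-> walk k A x l1 /\ walk k A (last l1 x) l2.
Proof.
  revert x; induction l1 as [|y l1 IH]; intros x.
  - simpl. split; [intros H; split; [eapply walk_start; eauto | exact H] | tauto].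
  - rewrite last_cons', <- app_comm_cons. cbn [walk]. rewrite IH. tauto.
Qed.

Lemma walk_weight_app w x l1 l2 :
  walk_weight w x (l1 ++ l2) = (walk_weight w x l1 + walk_weight w (last l1 x) l2)%Z.
Proof.
  revert x; induction l1 as [|y l1 IH]; intros x; [simpl; lia|].
  rewrite last_cons'. simpl walk_weight at 1. rewrite IH. simpl. lia.
Qed.

Lemma walk_weight_opp w x l :
  walk_weight (fun a b => (- w a b)%Z) x l = (- walk_weight w x l)%Z.
Proof. revert x; induction l; intros; simpl; [auto|]. rewrite IHl. lia. Qed.

Lemma walk_nth k A x l j : walk k A x l -> (j <= length l)%nat -> (nth j (x :: l) 0%nat < k)%nat.
Proof.
  revert x j; induction l as [|y l IH]; intros x j H Hj; simpl in *.
  - destruct j; [auto|lia].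
  - destruct j; [tauto|]. apply IH; [tauto|lia].
Qed.

Lemma walk_states k A x l : walk k A x l -> forall z, In z l -> (z < k)%nat.
Proof.
  revert x; induction l; intros x H z Hz; [destruct Hz|]. destruct Hz as [<-|Hz].
  - destruct H as [_ [_ H]]. eapply walk_start; eauto.
  - destruct H as [_ [_ H]]. eapply IHl; eauto.
Qed.

Lemma walk_edge k A x l j : walk k A x l -> (j < length l)%nat ->
  A (nth j (x :: l) 0%nat) (nth (S j) (x :: l) 0%nat) = true.
Proof.
  revert x j; induction l as [|y l IH]; intros x j H Hj; simpl in Hj; [lia|].
  destruct j; simpl; [apply H|]. apply IH; [apply H|lia].
Qed.

Lemma pigeonhole k (f : nat -> nat) : (forall j, (j <= k)%nat -> (f j < k)%nat) ->
  exists i j, (i < j <= k)%nat /\ f i = f j.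
Proof.
  revert f; induction k as [|k IH]; intros f Hf.
  - specialize (Hf 0%nat (le_n 0)). lia.
  - destruct (classic (exists i, (i < S k)%nat /\ f i = f (S k))) as [[i [Hi E]]|Hn].
    + exists i, (S k). split; [lia|auto].
    + (* remove the value f (S k) and renumber the values above it *)
      set (g := fun j => if Nat.ltb (f j) (f (S k)) then f j else pred (f j)).
      assert (Hfk : forall j, (j <= k)%nat -> f j <> f (S k))
        by (intros j Hj E; apply Hn; exists j; split; [lia|auto]).
      assert (Hg : forall j, (j <= k)%nat -> (g j < k)%nat).
      { intros j Hj. unfold g. pose proof (Hfk j Hj). pose proof (Hf j ltac:(lia)).
        pose proof (Hf (S k) (le_n _)). destruct (Nat.ltb_spec (f j) (f (S k))); lia. }
      destruct (IH g Hg) as [i [j [Hij E]]]. exists i, j. split; [lia|].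
      pose proof (Hfk i ltac:(lia)). pose proof (Hfk j ltac:(lia)).
      unfold g in E. destruct (Nat.ltb_spec (f i) (f (S k))), (Nat.ltb_spec (f j) (f (S k))); lia.
Qed.

Lemma walk_contains_loop k A x l : walk k A x l -> (k <= length l)%nat ->
  exists l1 l2 l3, l = l1 ++ l2 ++ l3 /\ loop k A (last l1 x) l2 /\
    (length l2 <= k)%nat /\ walk k A x (l1 ++ l3).
Proof.
  intros Hv Hk.
  destruct (pigeonhole k (fun j => nth j (x :: l) 0%nat)) as [i [j [Hij E]]].
  { intros j Hj. apply (walk_nth k A); [auto|lia]. }
  set (l1 := firstn i l). set (l2 := firstn (j - i) (skipn i l)). set (l3 := skipn j l).
  assert (Hl : l = l1 ++ l2 ++ l3).
  { unfold l1, l2, l3. rewrite <- (firstn_skipn i l) at 1. f_equal.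
    replace (skipn j l) with (skipn (j - i) (skipn i l)) by (rewrite skipn_skipn; f_equal; lia).
    symmetry; apply firstn_skipn. }
  assert (Hlast1 : last l1 x = nth i (x :: l) 0%nat) by (apply last_firstn; lia).
  assert (Hlast2 : last l2 (last l1 x) = last l1 x).
  { rewrite <- last_app. unfold l1, l2. rewrite <- firstn_add.
    replace (i + (j - i))%nat with j by lia. rewrite last_firstn, <- E by lia.
    symmetry. apply last_firstn. lia. }
  rewrite Hl in Hv. apply walk_app in Hv as [Hv1 Hv23]. apply walk_app in Hv23 as [Hv2 Hv3].
  rewrite Hlast2 in Hv3.
  exists l1, l2, l3. repeat split; auto.
  - unfold l2. rewrite length_firstn, length_skipn. lia.
  - unfold l2. rewrite length_firstn. lia.
  - apply walk_app. auto.
Qed.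

Fixpoint sumZ (n : nat) (f : nat -> Z) : Z :=
  match n with O => 0%Z | S n' => (sumZ n' f + f n')%Z end.

Definition weight_bound (k : nat) (w : nat -> nat -> Z) : Z :=
  sumZ k (fun x => sumZ k (fun y => Z.abs (w x y))).

Lemma sumZ_nonneg n f : (forall j, (j < n)%nat -> 0 <= f j)%Z -> (0 <= sumZ n f)%Z.
Proof.
  induction n; simpl; intros H; [lia|].
  specialize (IHn (fun j Hj => H j ltac:(lia))). specialize (H n ltac:(lia)). lia.
Qed.

Lemma sumZ_ge_term n f j : (forall j, (j < n)%nat -> 0 <= f j)%Z -> (j < n)%nat -> (f j <= sumZ n f)%Z.
Proof.
  induction n; simpl; intros H Hj; [lia|].
  assert (0 <= sumZ n f)%Z by (apply sumZ_nonneg; intros; apply H; lia).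
  destruct (Nat.eq_dec j n) as [->|]; [pose proof (H n ltac:(lia)); lia|].
  specialize (IHn (fun j Hj => H j ltac:(lia)) ltac:(lia)). pose proof (H n ltac:(lia)); lia.
Qed.

Lemma weight_bound_nonneg k w : (0 <= weight_bound k w)%Z.
Proof. apply sumZ_nonneg; intros; apply sumZ_nonneg; intros; lia. Qed.

Lemma weight_bound_opp k w : weight_bound k (fun a b => (- w a b)%Z) = weight_bound k w.
Proof. unfold weight_bound. f_equal. extensionality x. f_equal. extensionality y. lia. Qed.

Lemma weight_bound_edge k w x y : (x < k)%nat -> (y < k)%nat -> (Z.abs (w x y) <= weight_bound k w)%Z.
Proof.
  intros Hx Hy. unfold weight_bound.
  eapply Z.le_trans; [| apply (sumZ_ge_term k _ x); [|exact Hx]].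
  - apply (sumZ_ge_term k (fun y => Z.abs (w x y)) y); [intros; lia| exact Hy].
  - intros; apply sumZ_nonneg; intros; lia.
Qed.

Lemma walk_weight_abs k A w x l : walk k A x l ->
  (Z.abs (walk_weight w x l) <= Z.of_nat (length l) * weight_bound k w)%Z.
Proof.
  revert x; induction l as [|y l IH]; intros x H; [simpl; lia|].
  destruct H as [Hx [_ H]]. specialize (IH _ H).
  pose proof (weight_bound_edge k w x y Hx (walk_start _ _ _ _ H)).
  cbn [walk_weight length]. rewrite Nat2Z.inj_succ. lia.
Qed.

Lemma positive_loop_or_bounded k A w x l : walk k A x l ->
  (exists y q, loop k A y q /\ (length q <= k)%nat /\ (walk_weight w y q > 0)%Z) \/
  (walk_weight w x l <= Z.of_nat k * weight_bound k w)%Z.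
Proof.
  remember (length l) as n eqn:Hlen. revert l Hlen.
  induction n as [n IH] using lt_wf_ind. intros l Hlen Hv.
  destruct (le_lt_dec n k) as [Hn|Hn].
  - right. pose proof (walk_weight_abs k A w x l Hv). pose proof (weight_bound_nonneg k w).
    assert (Z.of_nat (length l) <= Z.of_nat k)%Z by lia.
    assert (Z.of_nat (length l) * weight_bound k w <= Z.of_nat k * weight_bound k w)%Z
      by (apply Z.mul_le_mono_nonneg_r; lia).
    lia.
  - destruct (walk_contains_loop k A x l Hv ltac:(lia)) as [l1 [l2 [l3 [Hl [Hloop [Hlen2 Hv']]]]]].
    destruct (Z_lt_le_dec 0 (walk_weight w (last l1 x) l2)) as [Hpos|Hnp].
    + left. exists (last l1 x), l2. split; [exact Hloop|]. split; [exact Hlen2|lia].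
    + assert (Hshort : (length (l1 ++ l3) < n)%nat)
        by (destruct Hloop as [_ [? _]]; rewrite Hlen, Hl, !length_app in *; lia).
      destruct (IH _ Hshort (l1 ++ l3) eq_refl Hv') as [HL|HR]; [left; exact HL|right].
      destruct Hloop as [_ [_ Hlast]]. rewrite Hl, !walk_weight_app, Hlast.
      rewrite walk_weight_app in HR. lia.
Qed.

Definition vadd (u v : vecZ) : vecZ := fun i => (u i + v i)%Z.
Definition vscale (z : Z) (u : vecZ) : vecZ := fun i => (z * u i)%Z.
Definition vzero : vecZ := fun _ => 0%Z.

Definition walk_disp (h : nat -> nat -> vecZ) (x : nat) (l : list nat) : vecZ :=
  fun i => walk_weight (fun a b => h a b i) x l.

Lemma walk_disp_app h x l1 l2 :
  walk_disp h x (l1 ++ l2) = vadd (walk_disp h x l1) (walk_disp h (last l1 x) l2).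
Proof. extensionality i. apply walk_weight_app. Qed.

Lemma hom_zero d L : is_hom d L -> L vzero = 0%Z.
Proof.
  intros [_ H]. specialize (H vzero vzero).
  replace (fun i => (vzero i + vzero i)%Z) with vzero in H by (extensionality i; unfold vzero; lia).
  lia.
Qed.

Lemma hom_add d L u v : is_hom d L -> L (vadd u v) = (L u + L v)%Z.
Proof. intros [_ H]. apply H. Qed.

Lemma hom_nat d L u n : is_hom d L -> L (vscale (Z.of_nat n) u) = (Z.of_nat n * L u)%Z.
Proof.
  intros HL. induction n as [|n IH].
  - replace (vscale (Z.of_nat 0) u) with vzero by (extensionality i; unfold vscale, vzero; lia).
    rewrite (hom_zero d L) by auto. lia.
  - replace (vscale (Z.of_nat (S n)) u) with (vadd (vscale (Z.of_nat n) u) u)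
      by (extensionality i; unfold vadd, vscale; lia).
    rewrite (hom_add d L), IH by auto. lia.
Qed.

Lemma hom_scale d L u z : is_hom d L -> L (vscale z u) = (z * L u)%Z.
Proof.
  intros HL. destruct (Z_le_gt_dec 0 z).
  - replace z with (Z.of_nat (Z.to_nat z)) by lia. apply (hom_nat d L); auto.
  - (* L(-v) = -L(v) since L(v) + L(-v) = L(0) = 0 *)
    set (v := vscale (Z.of_nat (Z.to_nat (- z))) u).
    pose proof (hom_add d L v (vscale z u) HL) as Hsum.
    replace (vadd v (vscale z u)) with vzero in Hsum
      by (extensionality i; unfold v, vadd, vscale, vzero; lia).
    unfold v in Hsum. rewrite (hom_zero d L), (hom_nat d L) in Hsum by auto. lia.
Qed.

Lemma sumZ_ext n f g : (forall j, (j < n)%nat -> f j = g j) -> sumZ n f = sumZ n g.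
Proof. induction n; intros H; simpl; [auto|]. rewrite IHn, H by (auto; lia). auto. Qed.

Lemma hom_decomp d L v : is_hom d L -> L v = sumZ d (fun i => (L (unitZ i) * v i)%Z).
Proof.
  intros HL.
  set (vsum := fun n j => sumZ n (fun i => (v i * unitZ i j)%Z)).
  assert (Hagree : forall n j, (j < n)%nat -> vsum n j = v j).
  { intros n j Hj. unfold vsum. induction n as [|n IH]; [lia|]. simpl.
    destruct (Nat.eq_dec j n) as [->|Hne].
    - rewrite (sumZ_ext n _ (fun _ => 0%Z)).
      + assert (Hz : forall m, sumZ m (fun _ => 0%Z) = 0%Z) by (induction m; simpl; lia).
        rewrite Hz. unfold unitZ. rewrite Nat.eqb_refl. lia.
      + intros i Hi. unfold unitZ. destruct (Nat.eqb_spec n i); lia.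
    - rewrite IH by lia. unfold unitZ. destruct (Nat.eqb_spec j n); lia. }
  transitivity (L (vsum d)).
  { destruct HL as [Hext _]. apply Hext. intros i Hi. rewrite Hagree; auto. }
  assert (Hpartial : forall n, L (vsum n) = sumZ n (fun i => (L (unitZ i) * v i)%Z));
    [|apply Hpartial].
  induction n as [|n IH].
  - replace (vsum 0%nat) with vzero by (extensionality i; reflexivity). apply (hom_zero d L); auto.
  - replace (vsum (S n)) with (vadd (vsum n) (vscale (v n) (unitZ n)))
      by (extensionality i; unfold vsum, vadd, vscale; simpl; lia).
    rewrite (hom_add d L), (hom_scale d L), IH by auto. simpl. lia.
Qed.

Lemma hom_walk_disp d L h x l : is_hom d L ->
  L (walk_disp h x l) = walk_weight (fun a b => L (h a b)) x l.
Proof.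
  intros HL. revert x; induction l as [|y l IH]; intros x.
  - apply (hom_zero d L); auto.
  - change (walk_disp h x (y :: l)) with (vadd (h x y) (walk_disp h y l)).
    rewrite (hom_add d L), IH by auto. reflexivity.
Qed.

(* The walk s_1 ... s_n traced from s_0 by the orbit segment of s. *)
Definition walk_of (s : Z -> nat) (n : nat) : list nat :=
  map (fun j => s (Z.of_nat (S j))) (seq 0 n).

Lemma walk_of_S s n : walk_of s (S n) = walk_of s n ++ [s (Z.of_nat (S n))].
Proof. unfold walk_of. rewrite seq_S, map_app. reflexivity. Qed.

Lemma walk_of_length s n : length (walk_of s n) = n.
Proof. unfold walk_of. rewrite length_map, length_seq. reflexivity. Qed.

Lemma walk_of_last s n : last (walk_of s n) (s 0%Z) = s (Z.of_nat n).
Proof. destruct n; [reflexivity|]. rewrite walk_of_S, last_last. reflexivity. Qed.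

Lemma hsum_walk h s n : hsum h s n = walk_disp h (s 0%Z) (walk_of s n).
Proof.
  induction n as [|n IH]; [reflexivity|].
  rewrite walk_of_S, walk_disp_app, walk_of_last. simpl hsum. rewrite IH.
  extensionality i. unfold vadd, walk_disp. simpl.
  replace (Z.pos (Pos.of_succ_nat n)) with (Z.of_nat n + 1)%Z by lia. lia.
Qed.

Lemma walk_of_walk k A s n : inSigma k A s -> walk k A (s 0%Z) (walk_of s n).
Proof.
  intros HS. induction n as [|n IH]; [apply HS|].
  rewrite walk_of_S. apply walk_app. split; auto. rewrite walk_of_last. simpl.
  destruct (HS (Z.of_nat n)) as [H1 H2]. destruct (HS (Z.of_nat (S n))) as [H3 _].
  replace (Z.pos (Pos.of_succ_nat n)) with (Z.of_nat n + 1)%Z by lia.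
  replace (Z.of_nat (S n)) with (Z.of_nat n + 1)%Z in H3 by lia. auto.
Qed.

Lemma walk_of_prefix s n x P : (n <= length P)%nat ->
  (forall j, (j <= n)%nat -> s (Z.of_nat j) = nth j (x :: P) 0%nat) ->
  walk_of s n = firstn n P.
Proof.
  intros Hn H. apply nth_ext with (d := 0%nat) (d' := 0%nat).
  - rewrite walk_of_length, length_firstn. lia.
  - intros j Hj. rewrite walk_of_length in Hj.
    rewrite (nth_firstn n P j 0%nat). destruct (Nat.ltb_spec j n); [|lia].
    unfold walk_of. rewrite nth_indep with (d' := s (Z.of_nat 1)) by (rewrite length_map, length_seq; lia).
    rewrite (map_nth (fun j0 => s (Z.of_nat (S j0))) (seq 0 n) 0%nat j), seq_nth by lia.
    apply (H (S j)). lia.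
Qed.

Definition periodic_point (x : nat) (l : list nat) (z : Z) : nat :=
  nth (Z.to_nat (z mod Z.of_nat (length l))) (x :: l) 0%nat.

Lemma periodic_point_zero x l : periodic_point x l 0%Z = x.
Proof. unfold periodic_point. rewrite Zmod_0_l. reflexivity. Qed.

Lemma periodic_point_periodic x l : (1 <= length l)%nat -> periodic (periodic_point x l) (length l).
Proof.
  intros H m. unfold periodic_point. do 2 f_equal.
  replace (m + Z.of_nat (length l))%Z with (m + 1 * Z.of_nat (length l))%Z by lia.
  apply Z.mod_add. lia.
Qed.

Lemma periodic_point_succ x l z : (1 <= length l)%nat -> last l x = x ->
  periodic_point x l (z + 1) = nth (S (Z.to_nat (z mod Z.of_nat (length l)))) (x :: l) 0%nat.
Proof.
  intros Hl Hlast. unfold periodic_point. set (n0 := Z.of_nat (length l)).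
  assert (Hn0 : (0 < n0)%Z) by (unfold n0; lia).
  pose proof (Z.mod_pos_bound z n0 Hn0) as Hb.
  pose proof (Z.div_mod z n0 ltac:(lia)) as Hdiv.
  destruct (Z.eq_dec (z mod n0 + 1) n0) as [Heq|Hne].
  - (* wrapping around: the last state of the loop is x *)
    replace ((z + 1) mod n0)%Z with 0%Z
      by (apply Z.mod_unique_pos with (q := (z / n0 + 1)%Z); lia).
    replace (S (Z.to_nat (z mod n0))) with (length l) by lia.
    destruct (exists_last (l := l)) as [l' [y Hy]]; [intro; subst; simpl in Hl; lia|].
    rewrite Hy in Hlast |- *. rewrite last_last in Hlast. subst y.
    rewrite length_app. replace (length l' + length [x])%nat with (S (length l')) by (simpl; lia).
    cbn [nth]. rewrite app_nth2, Nat.sub_diag by lia. reflexivity.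
  - replace ((z + 1) mod n0)%Z with (z mod n0 + 1)%Z
      by (apply Z.mod_unique_pos with (q := (z / n0)%Z); lia).
    f_equal. lia.
Qed.

Lemma periodic_point_inSigma k A x l : loop k A x l -> inSigma k A (periodic_point x l).
Proof.
  intros [Hv [Hl Hlast]] z. pose proof (Z.mod_pos_bound z (Z.of_nat (length l)) ltac:(lia)).
  split.
  - apply (walk_nth k A); auto. lia.
  - rewrite periodic_point_succ by auto. apply (walk_edge k A); auto. lia.
Qed.

Open Scope R_scope.

Lemma sum_lt_ext n f g : (forall j, (j < n)%nat -> f j = g j) -> sum_lt n f = sum_lt n g.
Proof. induction n; intros H; simpl; [auto|]. rewrite IHn, H by (auto; lia). auto. Qed.

Lemma sum_lt_plus n f g : sum_lt n (fun j => f j + g j) = sum_lt n f + sum_lt n g.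
Proof. induction n; simpl; [lra|]. rewrite IHn. lra. Qed.

Lemma sum_lt_minus n f g : sum_lt n (fun j => f j - g j) = sum_lt n f - sum_lt n g.
Proof. induction n; simpl; [lra|]. rewrite IHn. lra. Qed.

Lemma sum_lt_scal n c f : sum_lt n (fun j => c * f j) = c * sum_lt n f.
Proof. induction n; simpl; [lra|]. rewrite IHn. lra. Qed.

Lemma sum_lt_const n c : sum_lt n (fun _ => c) = INR n * c.
Proof. induction n; simpl sum_lt; [simpl; lra|]. rewrite IHn, S_INR. lra. Qed.

Lemma sum_lt_le n f g : (forall j, (j < n)%nat -> f j <= g j) -> sum_lt n f <= sum_lt n g.
Proof.
  induction n; intros H; simpl; [lra|].
  pose proof (H n ltac:(lia)). pose proof (IHn ltac:(intros; apply H; lia)). lra.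
Qed.

Lemma sum_lt_nonneg n f : (forall j, (j < n)%nat -> 0 <= f j) -> 0 <= sum_lt n f.
Proof.
  intros H. replace 0 with (sum_lt n (fun _ => 0)) by (rewrite sum_lt_const; lra).
  apply sum_lt_le; auto.
Qed.

Lemma sum_lt_abs n f : Rabs (sum_lt n f) <= sum_lt n (fun j => Rabs (f j)).
Proof. induction n; simpl; [rewrite Rabs_R0; lra|]. eapply Rle_trans; [apply Rabs_triang|]. lra. Qed.

Lemma sum_lt_ge_term n f j : (forall j, (j < n)%nat -> 0 <= f j) -> (j < n)%nat -> f j <= sum_lt n f.
Proof.
  induction n; intros H Hj; [lia|]. simpl.
  assert (0 <= sum_lt n f) by (apply sum_lt_nonneg; intros; apply H; lia).
  destruct (Nat.eq_dec j n) as [->|]; [lra|].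
  pose proof (IHn ltac:(intros; apply H; lia) ltac:(lia)). pose proof (H n ltac:(lia)). lra.
Qed.

Lemma sum_lt_S n f : sum_lt (S n) f = f 0%nat + sum_lt n (fun i => f (S i)).
Proof. induction n; simpl; [lra|]. simpl in IHn. rewrite IHn. lra. Qed.

Lemma IZR_sumZ n (f : nat -> Z) : IZR (sumZ n f) = sum_lt n (fun j => IZR (f j)).
Proof. induction n; simpl; [auto|]. rewrite plus_IZR, IHn. auto. Qed.

Lemma sum_lt_incr n (c : nat -> nat) J (g : nat -> R) : (J < n)%nat ->
  sum_lt n (fun j => INR (if Nat.eqb j J then S (c j) else c j) * g j) =
  sum_lt n (fun j => INR (c j) * g j) + g J.
Proof.
  induction n; intros H; [lia|]. simpl. destruct (Nat.eqb_spec n J) as [->|Hne].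
  - rewrite (sum_lt_ext J _ (fun j => INR (c j) * g j)); [rewrite S_INR; lra|].
    intros j Hj. destruct (Nat.eqb_spec j J); [lia|auto].
  - rewrite IHn by lia. lra.
Qed.

(* Greedy scheduling.  To use the indices j < m with frequencies rho_j, step
   t+1 chooses an index whose count lags most behind rho_j (t+1). *)
Fixpoint argmax (m : nat) (f : nat -> R) : nat :=
  match m with
  | O => O
  | S m' => if Rlt_dec (f (argmax m' f)) (f m') then m' else argmax m' f
  end.

Lemma argmax_spec m f : (argmax (S m) f < S m)%nat /\
  forall i, (i <= m)%nat -> f i <= f (argmax (S m) f).
Proof.
  induction m as [|m [IH1 IH2]].
  - simpl. destruct (Rlt_dec (f 0%nat) (f 0%nat)); split; try lia;
      intros i Hi; replace i with 0%nat by lia; lra.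
  - change (argmax (S (S m)) f) with
      (if Rlt_dec (f (argmax (S m) f)) (f (S m)) then S m else argmax (S m) f).
    destruct (Rlt_dec (f (argmax (S m) f)) (f (S m))) as [Hl|Hl];
      (split; [lia|]); intros i Hi; destruct (Nat.eq_dec i (S m)) as [->|]; try lra;
      pose proof (IH2 i ltac:(lia)); lra.
Qed.

Lemma argmax_lt m f : (0 < m)%nat -> (argmax m f < m)%nat.
Proof. intros H. destruct m; [lia|]. apply argmax_spec. Qed.

Lemma argmax_ge m f i : (i < m)%nat -> f i <= f (argmax m f).
Proof. intros H. destruct m; [lia|]. apply argmax_spec. lia. Qed.

Fixpoint greedy_count (m : nat) (rho : nat -> R) (t : nat) : nat -> nat :=
  match t with
  | O => fun _ => O
  | S t' => let c := greedy_count m rho t' in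
            let j := argmax m (fun j => rho j * INR t - INR (c j)) in
            fun i => if Nat.eqb i j then S (c i) else c i
  end.

Definition greedy_choice (m : nat) (rho : nat -> R) (t : nat) : nat :=
  argmax m (fun j => rho j * INR (S t) - INR (greedy_count m rho t j)).

Lemma greedy_count_S m rho t i : greedy_count m rho (S t) i =
  if Nat.eqb i (greedy_choice m rho t) then S (greedy_count m rho t i) else greedy_count m rho t i.
Proof. reflexivity. Qed.

Lemma greedy_choice_lt m rho t : (0 < m)%nat -> (greedy_choice m rho t < m)%nat.
Proof. apply argmax_lt. Qed.

Lemma greedy_count_sum m rho t : (0 < m)%nat ->
  sum_lt m (fun j => INR (greedy_count m rho t j)) = INR t.
Proof.
  intros Hm. induction t.
  - rewrite (sum_lt_ext _ _ (fun _ => 0)) by (intros; reflexivity). rewrite sum_lt_const. simpl; lra.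
  - rewrite (sum_lt_ext _ _ (fun j => INR (if Nat.eqb j (greedy_choice m rho t)
        then S (greedy_count m rho t j) else greedy_count m rho t j) * 1))
      by (intros j Hj; rewrite greedy_count_S; lra).
    rewrite sum_lt_incr by (apply greedy_choice_lt; auto).
    rewrite (sum_lt_ext _ _ (fun j => INR (greedy_count m rho t j))) by (intros; lra).
    rewrite IHt, S_INR. lra.
Qed.

Section GreedyDiscrepancy.

Variable m : nat.
Variable rho : nat -> R.
Hypothesis m_pos : (0 < m)%nat.
Hypothesis rho_nonneg : forall j, (j < m)%nat -> 0 <= rho j.
Hypothesis rho_sum : sum_lt m rho = 1.

Lemma greedy_count_lag t j : (j < m)%nat -> rho j * INR t - INR (greedy_count m rho t j) > -1.
Proof.
  induction t as [|t IH] in j |- *; intros Hj.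
  - simpl. pose proof (rho_nonneg j Hj). lra.
  - set (f := fun j => rho j * INR (S t) - INR (greedy_count m rho t j)).
    set (J := greedy_choice m rho t).
    (* the lags f sum to 1, so the maximal one, f J, is positive *)
    assert (Hsum : sum_lt m f = 1).
    { unfold f. rewrite sum_lt_minus, greedy_count_sum by auto.
      rewrite (sum_lt_ext _ _ (fun j => INR (S t) * rho j)) by (intros; lra).
      rewrite sum_lt_scal, rho_sum, S_INR. lra. }
    assert (Hpos : f J > 0).
    { assert (sum_lt m f <= sum_lt m (fun _ => f J))
        by (apply sum_lt_le; intros; apply argmax_ge; auto).
      rewrite sum_lt_const, Hsum in H. apply lt_0_INR in m_pos.
      destruct (Rle_lt_dec (f J) 0); [|lra].
      assert (INR m * f J <= 0) by (rewrite <- (Rmult_0_r (INR m)); apply Rmult_le_compat_l; lra).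
      lra. }
    rewrite greedy_count_S. fold J. destruct (Nat.eqb_spec j J) as [->|Hne].
    + unfold f in Hpos. rewrite !S_INR in *. lra.
    + pose proof (IH j Hj). rewrite S_INR in *. pose proof (rho_nonneg j Hj). lra.
Qed.

Lemma greedy_discrepancy t j : (j < m)%nat ->
  Rabs (INR (greedy_count m rho t j) - rho j * INR t) <= INR m.
Proof.
  intros Hj.
  set (x := fun i => rho i * INR t - INR (greedy_count m rho t i) + 1).
  assert (Hsx : sum_lt m x = INR m).
  { unfold x. rewrite sum_lt_plus, sum_lt_minus, greedy_count_sum, sum_lt_const by auto.
    rewrite (sum_lt_ext _ _ (fun i => INR t * rho i)) by (intros; lra).
    rewrite sum_lt_scal, rho_sum. lra. }
  assert (x j <= sum_lt m x)
    by (apply sum_lt_ge_term; auto; intros i Hi; pose proof (greedy_count_lag t i Hi); unfold x; lra).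
  rewrite Hsx in H. unfold x in H. pose proof (greedy_count_lag t j Hj).
  assert (1 <= INR m) by (apply (le_INR 1); lia). apply Rabs_le. lra.
Qed.

End GreedyDiscrepancy.

Fixpoint greedy_word (m : nat) (rho : nat -> R) (F : nat -> list nat) (t : nat) : list nat :=
  match t with
  | O => []
  | S t' => greedy_word m rho F t' ++ F (greedy_choice m rho t')
  end.

Definition greedy_point (a m : nat) (rho : nat -> R) (F : nat -> list nat) (z : Z) : nat :=
  if (z <? 0)%Z then periodic_point a (F 0%nat) z
  else nth (Z.to_nat z) (a :: greedy_word m rho F (S (Z.to_nat z))) 0%nat.

Lemma greedy_word_prefix m rho F t t' : (t <= t')%nat ->
  exists r, greedy_word m rho F t' = greedy_word m rho F t ++ r.
Proof.
  induction 1 as [|t' _ [r Hr]]; [exists []; rewrite app_nil_r; auto|].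
  exists (r ++ F (greedy_choice m rho t')). simpl. rewrite Hr, app_assoc. auto.
Qed.

Section GreedyWord.

Variables (k : nat) (A : nat -> nat -> bool) (a m : nat) (rho : nat -> R) (F : nat -> list nat).
Hypothesis m_pos : (0 < m)%nat.
Hypothesis F_loops : forall j, (j < m)%nat -> loop k A a (F j).

Lemma loop_choice t : loop k A a (F (greedy_choice m rho t)).
Proof. apply F_loops, greedy_choice_lt, m_pos. Qed.

Lemma greedy_word_last t : last (greedy_word m rho F t) a = a.
Proof. induction t; [reflexivity|]. simpl. rewrite last_app, IHt. apply loop_choice. Qed.

Lemma greedy_word_walk t : walk k A a (greedy_word m rho F t).
Proof.
  induction t; simpl.
  - apply (walk_start k A a (F 0%nat)), F_loops, m_pos.
  - apply walk_app. rewrite greedy_word_last. split; [auto|apply loop_choice].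
Qed.

Lemma greedy_word_length_ge t : (t <= length (greedy_word m rho F t))%nat.
Proof.
  induction t; simpl; [lia|]. rewrite length_app.
  destruct (loop_choice t) as [_ [? _]]. lia.
Qed.

Lemma greedy_word_additive (g : list nat -> R) t : g [] = 0 ->
  (forall l1 l2, last l1 a = a -> g (l1 ++ l2) = g l1 + g l2) ->
  g (greedy_word m rho F t) = sum_lt m (fun j => INR (greedy_count m rho t j) * g (F j)).
Proof.
  intros Hnil Hadd. induction t.
  - cbn [greedy_word]. rewrite Hnil, (sum_lt_ext _ _ (fun j => 0 * g (F j))) by (intros; simpl; lra).
    rewrite sum_lt_scal. lra.
  - simpl greedy_word. rewrite Hadd, IHt by apply greedy_word_last.
    rewrite (sum_lt_ext m (fun j => INR (greedy_count m rho (S t) j) * g (F j))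
      (fun j => INR (if Nat.eqb j (greedy_choice m rho t)
        then S (greedy_count m rho t j) else greedy_count m rho t j) * g (F j)))
      by (intros; rewrite greedy_count_S; reflexivity).
    rewrite sum_lt_incr by (apply greedy_choice_lt; auto). reflexivity.
Qed.

Lemma greedy_point_nth n T : (n <= length (greedy_word m rho F T))%nat ->
  greedy_point a m rho F (Z.of_nat n) = nth n (a :: greedy_word m rho F T) 0%nat.
Proof.
  intros H. unfold greedy_point. destruct (Z.ltb_spec (Z.of_nat n) 0); [lia|].
  rewrite Nat2Z.id. pose proof (greedy_word_length_ge (S n)).
  assert (Hext : forall P r, (n <= length P)%nat -> nth n (a :: P) 0%nat = nth n (a :: P ++ r) 0%nat)
    by (intros P r HP; rewrite app_comm_cons, app_nth1; simpl; auto; lia).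
  destruct (Nat.le_ge_cases (S n) T) as [Hle|Hle];
    destruct (greedy_word_prefix m rho F _ _ Hle) as [r Hr]; rewrite Hr.
  - apply Hext. lia.
  - symmetry. apply Hext. lia.
Qed.

Lemma greedy_point_inSigma : inSigma k A (greedy_point a m rho F).
Proof.
  intros z. assert (Hl0 := F_loops 0%nat m_pos).
  destruct (Z_lt_le_dec z 0) as [Hz|Hz].
  - (* backwards the point is the periodic point of F 0, which passes a at time 0 *)
    assert (E : forall z', (z' <= 0)%Z -> greedy_point a m rho F z' = periodic_point a (F 0%nat) z').
    { intros z' Hz'. destruct (Z.eq_dec z' 0) as [->|Hne].
      - rewrite periodic_point_zero. change 0%Z with (Z.of_nat 0).
        rewrite (greedy_point_nth 0 0); [reflexivity|simpl; lia].
      - unfold greedy_point. destruct (Z.ltb_spec z' 0); [auto|lia]. }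
    rewrite !E by lia. apply periodic_point_inSigma; auto.
  - replace z with (Z.of_nat (Z.to_nat z)) by lia. set (n := Z.to_nat z).
    replace (Z.of_nat n + 1)%Z with (Z.of_nat (S n)) by lia.
    pose proof (greedy_word_length_ge (S (S n))).
    rewrite (greedy_point_nth n (S (S n))), (greedy_point_nth (S n) (S (S n))) by lia.
    split.
    + apply (walk_nth k A); [apply greedy_word_walk|lia].
    + apply (walk_edge k A); [apply greedy_word_walk|lia].
Qed.

Lemma greedy_orbit_walk n : exists t r,
  (r < length (F (greedy_choice m rho t)))%nat /\
  n = (length (greedy_word m rho F t) + r)%nat /\
  walk_of (greedy_point a m rho F) n = greedy_word m rho F t ++ firstn r (F (greedy_choice m rho t)).
Proof.
  assert (Hblock : exists t, (length (greedy_word m rho F t) <= n <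
                              length (greedy_word m rho F (S t)))%nat).
  { induction n as [|n [t Ht]].
    - exists 0%nat. pose proof (greedy_word_length_ge 1). simpl in *. lia.
    - destruct (Nat.eq_dec (S n) (length (greedy_word m rho F (S t)))) as [E|Hne].
      + exists (S t). destruct (loop_choice (S t)) as [_ [Hl _]].
        change (greedy_word m rho F (S (S t))) with
          (greedy_word m rho F (S t) ++ F (greedy_choice m rho (S t))).
        rewrite length_app. lia.
      + exists t. lia. }
  destruct Hblock as [t Ht]. simpl greedy_word in Ht. rewrite length_app in Ht.
  set (P := greedy_word m rho F t) in *. set (FJ := F (greedy_choice m rho t)) in *.
  exists t, (n - length P)%nat. fold P FJ. split; [lia|]. split; [lia|].
  rewrite (walk_of_prefix _ n a (P ++ FJ)).
  - rewrite firstn_app, firstn_all2 by lia. reflexivity.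
  - rewrite length_app. lia.
  - intros j Hj. apply (greedy_point_nth j (S t)). simpl. fold P FJ. rewrite length_app. lia.
Qed.

End GreedyWord.

Lemma cv_of_bounded_deviation (u : nat -> R) y K :
  (forall n, Rabs (u n - INR n * y) <= K) -> Un_cv (fun n => u n / INR n) y.
Proof.
  intros Hbound eps Heps.
  assert (HK : 0 <= K) by (specialize (Hbound 0%nat); pose proof (Rabs_pos (u 0%nat - INR 0 * y)); lra).
  destruct (archimed (K / eps)) as [Harch _].
  exists (S (Z.to_nat (up (K / eps)))). intros n Hn. unfold Rdist.
  assert (Hnpos : 0 < INR n) by (apply lt_0_INR; lia).
  assert (HnK : K / eps < INR n).
  { eapply Rlt_le_trans; [exact Harch|]. rewrite INR_IZR_INZ. apply IZR_le.
    destruct (Z_lt_le_dec (up (K / eps)) 0); lia. }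
  replace (u n / INR n - y) with ((u n - INR n * y) / INR n) by (field; lra).
  unfold Rdiv. rewrite Rabs_mult, (Rabs_right (/ INR n)) by (apply Rle_ge, Rlt_le, Rinv_0_lt_compat; lra).
  apply Rle_lt_trans with (K * / INR n).
  { apply Rmult_le_compat_r; [apply Rlt_le, Rinv_0_lt_compat; lra|auto]. }
  apply (Rmult_lt_reg_r (INR n)); [lra|]. rewrite Rmult_assoc, Rinv_l by lra.
  apply (Rmult_lt_reg_r (/ eps)); [apply Rinv_0_lt_compat; lra|].
  replace (eps * INR n * / eps) with (INR n) by (field; lra). unfold Rdiv in HnK. lra.
Qed.

Lemma block_sum_deviation m (c lam V len : nat -> R) Lam T E :
  0 < Lam -> sum_lt m (fun j => lam j * len j) = 1 -> (forall j, 0 <= len j) ->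
  (forall j, (j < m)%nat -> Rabs (c j - lam j / Lam * T) <= E) ->
  Rabs (sum_lt m (fun j => c j * V j) -
        sum_lt m (fun j => c j * len j) * sum_lt m (fun j => lam j * V j))
  <= E * sum_lt m (fun j => Rabs (V j)) + E * sum_lt m len * Rabs (sum_lt m (fun j => lam j * V j)).
Proof.
  intros HLam Hsum Hlen He.
  set (y := sum_lt m (fun j => lam j * V j)). set (e := fun j => c j - lam j / Lam * T).
  assert (E1 : sum_lt m (fun j => c j * V j) = sum_lt m (fun j => e j * V j) + T / Lam * y).
  { unfold y. rewrite <- sum_lt_scal, <- sum_lt_plus. apply sum_lt_ext. intros j _. unfold e. field. lra. }
  assert (E2 : sum_lt m (fun j => c j * len j) = sum_lt m (fun j => e j * len j) + T / Lam * 1).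
  { rewrite <- Hsum, <- sum_lt_scal, <- sum_lt_plus. apply sum_lt_ext. intros j _. unfold e. field. lra. }
  rewrite E1, E2.
  replace (sum_lt m (fun j => e j * V j) + T / Lam * y - (sum_lt m (fun j => e j * len j) + T / Lam * 1) * y)
    with (sum_lt m (fun j => e j * V j) - sum_lt m (fun j => e j * len j) * y) by ring.
  assert (H1 : Rabs (sum_lt m (fun j => e j * V j)) <= E * sum_lt m (fun j => Rabs (V j))).
  { eapply Rle_trans; [apply sum_lt_abs|]. rewrite <- sum_lt_scal. apply sum_lt_le. intros j Hj.
    rewrite Rabs_mult. apply Rmult_le_compat_r; [apply Rabs_pos|apply He; auto]. }
  assert (H2 : Rabs (sum_lt m (fun j => e j * len j)) <= E * sum_lt m len).
  { eapply Rle_trans; [apply sum_lt_abs|]. rewrite <- sum_lt_scal. apply sum_lt_le. intros j Hj.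
    rewrite Rabs_mult, (Rabs_right (len j)) by (apply Rle_ge, Hlen).
    apply Rmult_le_compat_r; [apply Hlen|apply He; auto]. }
  pose proof (Rabs_triang (sum_lt m (fun j => e j * V j)) (- (sum_lt m (fun j => e j * len j) * y))).
  rewrite Rabs_Ropp, Rabs_mult in H. pose proof (Rabs_pos y).
  pose proof (Rmult_le_compat_r (Rabs y) _ _ H0 H2). unfold Rminus. lra.
Qed.

Lemma loop_prefix_bound k A h a q r i : loop k A a q ->
  Rabs (IZR (walk_disp h a (firstn r q) i)) <=
  INR (length q) * IZR (weight_bound k (fun u v => h u v i)).
Proof.
  intros [Hv _]. rewrite <- (firstn_skipn r q) in Hv. apply walk_app in Hv as [Hv _].
  pose proof (walk_weight_abs k A (fun u v => h u v i) a _ Hv) as Hb.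
  unfold walk_disp. rewrite Rabs_Zabs.
  eapply Rle_trans; [apply IZR_le, Hb|]. rewrite mult_IZR, <- INR_IZR_INZ.
  apply Rmult_le_compat_r; [apply IZR_le, weight_bound_nonneg|].
  apply le_INR. rewrite length_firstn. lia.
Qed.

Section GreedyRotation.

Variables (k : nat) (A : nat -> nat -> bool) (h : nat -> nat -> vecZ) (a m : nat).
Variables (F : nat -> list nat) (lam : nat -> R).
Hypothesis m_pos : (0 < m)%nat.
Hypothesis F_loops : forall j, (j < m)%nat -> loop k A a (F j).
Hypothesis lam_nonneg : forall j, (j < m)%nat -> 0 <= lam j.
Hypothesis lam_normalised : sum_lt m (fun j => lam j * INR (length (F j))) = 1.

Lemma loop_length_le_total j : (j < m)%nat ->
  INR (length (F j)) <= sum_lt m (fun j => INR (length (F j))).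
Proof. intros Hj. apply (sum_lt_ge_term m (fun j => INR (length (F j)))); auto; intros; apply pos_INR. Qed.

Lemma total_weight_pos : 0 < sum_lt m lam.
Proof.
  set (Nmax := sum_lt m (fun j => INR (length (F j)))).
  assert (sum_lt m (fun j => lam j * INR (length (F j))) <= sum_lt m (fun j => Nmax * lam j)).
  { apply sum_lt_le. intros j Hj. pose proof (loop_length_le_total j Hj) as HN. fold Nmax in HN.
    pose proof (lam_nonneg j Hj). pose proof (pos_INR (length (F j))). nra. }
  rewrite sum_lt_scal, lam_normalised in H.
  assert (0 <= sum_lt m lam) by (apply sum_lt_nonneg; auto).
  destruct (Req_dec (sum_lt m lam) 0) as [E|]; [rewrite E in H; lra|lra].
Qed.

Lemma frequencies_nonneg j : (j < m)%nat -> 0 <= lam j / sum_lt m lam.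
Proof.
  intros Hj. apply Rmult_le_pos; [auto|apply Rlt_le, Rinv_0_lt_compat, total_weight_pos].
Qed.

Lemma frequencies_sum : sum_lt m (fun j => lam j / sum_lt m lam) = 1.
Proof.
  pose proof total_weight_pos.
  rewrite (sum_lt_ext _ _ (fun j => / sum_lt m lam * lam j)) by (intros; unfold Rdiv; lra).
  rewrite sum_lt_scal. field. lra.
Qed.

Lemma greedy_point_deviation i : exists K, forall n,
  Rabs (IZR (hsum h (greedy_point a m (fun j => lam j / sum_lt m lam) F) n i) -
        INR n * sum_lt m (fun j => lam j * IZR (walk_disp h a (F j) i))) <= K.
Proof.
  set (rho := fun j => lam j / sum_lt m lam). set (len := fun j => INR (length (F j))).
  set (Nmax := sum_lt m len). set (V := fun j => IZR (walk_disp h a (F j) i)).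
  set (y := sum_lt m (fun j => lam j * V j)). set (B := IZR (weight_bound k (fun u v => h u v i))).
  exists (INR m * sum_lt m (fun j => Rabs (V j)) + INR m * Nmax * Rabs y + Nmax * B + Nmax * Rabs y).
  intros n. destruct (greedy_orbit_walk k A a m rho F m_pos F_loops n) as [t [r [Hr [Hn Hw]]]].
  set (J := greedy_choice m rho t) in *. set (P := greedy_word m rho F t) in *.
  set (c := fun j => INR (greedy_count m rho t j)).
  assert (HJ : (J < m)%nat) by (apply greedy_choice_lt; auto).
  (* the orbit walk is P, made of whole loops, followed by a prefix of F J *)
  assert (Hstart : greedy_point a m rho F 0%Z = a)
    by (apply (greedy_point_nth k A a m rho F m_pos F_loops 0 0); simpl; lia).
  assert (HlastP : last P a = a) by apply (greedy_word_last k A a m rho F m_pos F_loops).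
  rewrite hsum_walk, Hstart, Hw, walk_disp_app, HlastP. unfold vadd. rewrite plus_IZR.
  change (sum_lt m (fun j => lam j * IZR (walk_disp h a (F j) i))) with y.
  assert (HP : IZR (walk_disp h a P i) = sum_lt m (fun j => c j * V j)).
  { apply (greedy_word_additive k A a m rho F m_pos F_loops (fun l => IZR (walk_disp h a l i)));
      [reflexivity|]. intros l1 l2 Hl1. rewrite walk_disp_app, Hl1. apply plus_IZR. }
  assert (HPn : INR (length P) = sum_lt m (fun j => c j * len j)).
  { apply (greedy_word_additive k A a m rho F m_pos F_loops (fun l => INR (length l))); [reflexivity|].
    intros. rewrite length_app. apply plus_INR. }
  assert (Hdev := block_sum_deviation m c lam V len (sum_lt m lam) (INR t) (INR m)
                    total_weight_pos lam_normalised (fun j => pos_INR _)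
                    (fun j Hj => greedy_discrepancy m rho m_pos frequencies_nonneg frequencies_sum t j Hj)).
  fold y in Hdev. rewrite <- HP, <- HPn in Hdev. fold Nmax in Hdev.
  (* the partial loop has length r < |F J| <= Nmax *)
  assert (HNJ : len J <= Nmax) by (apply loop_length_le_total; auto).
  assert (HrN : INR r <= Nmax) by (eapply Rle_trans; [|exact HNJ]; apply le_INR; lia).
  assert (HPi : Rabs (IZR (walk_disp h a (firstn r (F J)) i)) <= Nmax * B).
  { eapply Rle_trans; [apply (loop_prefix_bound k A); auto|].
    apply Rmult_le_compat_r; [apply IZR_le, weight_bound_nonneg|exact HNJ]. }
  assert (Hry : Rabs (INR r * y) <= Nmax * Rabs y)
    by (rewrite Rabs_mult, Rabs_right by (apply Rle_ge, pos_INR);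
        apply Rmult_le_compat_r; [apply Rabs_pos|auto]).
  set (Pi := IZR (walk_disp h a (firstn r (F J)) i)) in *.
  rewrite Hn, plus_INR.
  replace (IZR (walk_disp h a P i) + Pi - (INR (length P) + INR r) * y)
    with ((IZR (walk_disp h a P i) - INR (length P) * y) + (Pi - INR r * y)) by ring.
  pose proof (Rabs_triang (IZR (walk_disp h a P i) - INR (length P) * y) (Pi - INR r * y)).
  pose proof (Rabs_triang Pi (- (INR r * y))). rewrite Rabs_Ropp in H0. unfold Rminus in *. lra.
Qed.

Theorem greedy_point_rotation d :
  has_rot d h (greedy_point a m (fun j => lam j / sum_lt m lam) F)
    (fun i => sum_lt m (fun j => lam j * IZR (walk_disp h a (F j) i))).
Proof.
  intros i _. destruct (greedy_point_deviation i) as [K HK].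
  exact (cv_of_bounded_deviation _ _ K HK).
Qed.

End GreedyRotation.

Fixpoint loop_power (q : list nat) (t : nat) : list nat :=
  match t with O => [] | S t' => loop_power q t' ++ q end.

Lemma loop_power_length q t : length (loop_power q t) = (t * length q)%nat.
Proof. induction t; simpl; [auto|]. rewrite length_app, IHt. lia. Qed.

Lemma loop_power_last q t a : last q a = a -> last (loop_power q t) a = a.
Proof. intros H; induction t; simpl; [auto|]. rewrite last_app, IHt. auto. Qed.

Lemma loop_power_walk k A x l c : loop k A x l -> walk k A x (loop_power l c).
Proof.
  intros [Hv [_ Hl]]. induction c; simpl; [eapply walk_start; eauto|].
  apply walk_app. rewrite loop_power_last; auto.
Qed.

Lemma loop_power_disp h x l c : last l x = x ->
  walk_disp h x (loop_power l c) = vscale (Z.of_nat c) (walk_disp h x l).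
Proof.
  intros Hl. induction c; simpl.
  - extensionality i. reflexivity.
  - rewrite walk_disp_app, loop_power_last, IHc by auto.
    extensionality i. unfold vadd, vscale. lia.
Qed.

Lemma loop_power_nth k A a q : loop k A a q -> forall T j, (j <= T * length q)%nat ->
  nth j (a :: loop_power q T) 0%nat = periodic_point a q (Z.of_nat j).
Proof.
  intros [Hv [Hl Hlast]]. induction T as [|T IH]; intros j Hj.
  - simpl in Hj. replace j with 0%nat by lia. rewrite periodic_point_zero. reflexivity.
  - simpl loop_power. destruct (le_lt_dec j (T * length q)) as [Hle|Hgt].
    + rewrite app_comm_cons, app_nth1 by (simpl; rewrite loop_power_length; lia). apply IH; auto.
    + rewrite app_comm_cons, app_nth2 by (simpl; rewrite loop_power_length; lia).
      simpl length. rewrite loop_power_length.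
      unfold periodic_point. set (n0 := length q). set (r := (j - S (T * n0))%nat).
      assert (Hr : (r < n0)%nat) by (unfold r; simpl in Hj; lia).
      destruct (Nat.eq_dec (S r) n0) as [E|Hne].
      * (* the last position of the loop is its base point *)
        replace (Z.of_nat j mod Z.of_nat n0)%Z with 0%Z
          by (apply Z.mod_unique_pos with (q := Z.of_nat (S T)); unfold r in E; lia).
        destruct (exists_last (l := q)) as [l' [z Hz]]; [intro E'; subst; simpl in Hl; lia|].
        unfold n0 in *. rewrite Hz in Hlast |- *. rewrite last_last in Hlast. subst z.
        rewrite Hz, length_app in E. simpl in E. simpl.
        rewrite app_nth2 by lia. replace (r - length l')%nat with 0%nat by lia. auto.
      * replace (Z.of_nat j mod Z.of_nat n0)%Z with (Z.of_nat (S r))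
          by (apply Z.mod_unique_pos with (q := Z.of_nat T); unfold r; simpl in Hj; lia).
        rewrite Nat2Z.id. reflexivity.
Qed.

Lemma greedy_point_single k A a q rho : loop k A a q ->
  greedy_point a 1 rho (fun _ => q) = periodic_point a q.
Proof.
  intros Hq. extensionality z. unfold greedy_point. destruct (Z.ltb_spec z 0); [reflexivity|].
  assert (Hp : forall t, greedy_word 1 rho (fun _ => q) t = loop_power q t)
    by (induction t; simpl; congruence).
  rewrite Hp, (loop_power_nth k A) by (auto; destruct Hq as [_ [Hl _]]; nia). f_equal. lia.
Qed.

Lemma periodic_point_rotation k A h d a q : loop k A a q ->
  has_rot d h (periodic_point a q) (fun i => / INR (length q) * IZR (walk_disp h a q i)).
Proof.
  intros Hq. assert (Hlen : 0 < INR (length q)) by (apply lt_0_INR; destruct Hq as [_ [Hl _]]; lia).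
  pose proof (greedy_point_rotation k A h a 1 (fun _ => q) (fun _ => / INR (length q)) ltac:(lia)
    ltac:(intros j Hj; exact Hq) ltac:(intros; apply Rlt_le, Rinv_0_lt_compat; auto)
    ltac:(simpl; field; lra) d) as Hrot.
  rewrite (greedy_point_single k A) in Hrot by auto.
  intros i Hi. specialize (Hrot i Hi). simpl in Hrot.
  replace (0 + / INR (length q) * IZR (walk_disp h a q i)) with (/ INR (length q) * IZR (walk_disp h a q i))
    in Hrot by ring. exact Hrot.
Qed.

Lemma Lhat_scaled d L c (v : vecZ) : is_hom d L ->
  Lhat d L (fun i => c * IZR (v i)) = c * IZR (L v).
Proof.
  intros HL. rewrite (hom_decomp d L v HL), IZR_sumZ. unfold Lhat.
  rewrite (sum_lt_ext _ _ (fun i => c * IZR (L (unitZ i) * v i)%Z)) by (intros; rewrite mult_IZR; ring).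
  apply sum_lt_scal.
Qed.

Lemma loop_rotation_Lhat k A h d L a q : is_hom d L -> loop k A a q ->
  exists x, has_rot d h (periodic_point a q) x /\
    Lhat d L x = / INR (length q) * IZR (walk_weight (fun u v => L (h u v)) a q).
Proof.
  intros HL Hq. eexists; split; [apply (periodic_point_rotation k A h d a q Hq)|].
  rewrite Lhat_scaled, (hom_walk_disp d L) by auto. reflexivity.
Qed.

Lemma orbit_walk_weight k A d h L s n : is_hom d L -> inSigma k A s ->
  walk k A (s 0%Z) (walk_of s n) /\
  walk_weight (fun u v => L (h u v)) (s 0%Z) (walk_of s n) = L (hsum h s n).
Proof.
  intros HL HS. split; [apply walk_of_walk; auto|]. rewrite hsum_walk, (hom_walk_disp d L); auto.
Qed.

Lemma large_sum_positive_loop k A h d L s n : is_hom d L -> inSigma k A s ->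
  (L (hsum h s n) > Z.of_nat k * weight_bound k (fun u v => L (h u v)))%Z ->
  exists y q, loop k A y q /\ (length q <= k)%nat /\ (walk_weight (fun u v => L (h u v)) y q > 0)%Z.
Proof.
  intros HL HS H. destruct (orbit_walk_weight k A d h L s n HL HS) as [Hv Hw].
  destruct (positive_loop_or_bounded k A (fun u v => L (h u v)) _ _ Hv) as [Hloop|Hle];
    [exact Hloop|lia].
Qed.

(* Part 1 of the theorem, with C = k * weight_bound (L o h) + 1. *)
Lemma threshold_periodic_points k A d h L : is_hom d L ->
  exists C : R, C > 0 /\
    (forall (s : Z -> nat) (n : nat), inSigma k A s -> (0 < n)%nat ->
       IZR (L (hsum h s n)) > C ->
       exists (s' : Z -> nat) (n' : nat), inSigma k A s' /\ (0 < n')%nat /\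
         periodic s' n' /\ exists x, has_rot d h s' x /\ Lhat d L x > 0) /\
    (forall (s : Z -> nat) (n : nat), inSigma k A s -> (0 < n)%nat ->
       IZR (L (hsum h s n)) < - C ->
       exists s'' : Z -> nat, inSigma k A s'' /\
         exists x, has_rot d h s'' x /\ Lhat d L x < 0).
Proof.
  intros HL. set (w := fun u v => L (h u v)). set (B := (Z.of_nat k * weight_bound k w)%Z).
  assert (HB : (0 <= B)%Z) by (unfold B; pose proof (weight_bound_nonneg k w); lia).
  exists (IZR B + 1). split; [apply IZR_le in HB; lra|]. split.
  - intros s n HS _ Hgt.
    destruct (large_sum_positive_loop k A h d L s n HL HS) as [y [q [Hq [_ Hpos]]]].
    { apply Z.lt_gt, lt_IZR. fold w B. lra. }
    exists (periodic_point y q), (length q).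
    split; [apply periodic_point_inSigma; auto|]. split; [apply Hq|].
    split; [apply periodic_point_periodic, Hq|].
    destruct (loop_rotation_Lhat k A h d L y q HL Hq) as [x [Hx Hlx]]. exists x. split; auto.
    rewrite Hlx. assert (0 < INR (length q)) by (apply lt_0_INR; destruct Hq as [_ [? _]]; lia).
    apply Rmult_lt_0_compat; [apply Rinv_0_lt_compat; auto|]. apply IZR_lt. lia.
  - (* the same argument for the weight -L o h *)
    intros s n HS _ Hlt. destruct (orbit_walk_weight k A d h L s n HL HS) as [Hv Hw]. fold w in Hw.
    destruct (positive_loop_or_bounded k A (fun u v => (- w u v)%Z) _ _ Hv) as [[y [q [Hq [_ Hneg]]]]|Hle].
    2:{ rewrite walk_weight_opp, weight_bound_opp in Hle. apply IZR_le in Hle.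
        rewrite opp_IZR, Hw in Hle. fold B in Hle. lra. }
    rewrite walk_weight_opp in Hneg.
    exists (periodic_point y q). split; [apply periodic_point_inSigma; auto|].
    destruct (loop_rotation_Lhat k A h d L y q HL Hq) as [x [Hx Hlx]]. exists x. split; auto.
    rewrite Hlx. fold w. assert (0 < INR (length q)) by (apply lt_0_INR; destruct Hq as [_ [? _]]; lia).
    assert (IZR (walk_weight w y q) < 0) by (apply IZR_lt; lia).
    assert (0 < / INR (length q)) by (apply Rinv_0_lt_compat; auto). nra.
Qed.

Lemma CV_const (c : R) : Un_cv (fun _ => c) c.
Proof. intros eps He. exists 0%nat. intros. unfold R_dist. rewrite Rminus_diag, Rabs_R0. lra. Qed.

Lemma CV_sum_lt d (a : nat -> R) (u : nat -> nat -> R) (l : nat -> R) :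
  (forall i, (i < d)%nat -> Un_cv (u i) (l i)) ->
  Un_cv (fun n => sum_lt d (fun i => a i * u i n)) (sum_lt d (fun i => a i * l i)).
Proof.
  induction d as [|d IH]; intros H; simpl; [apply CV_const|].
  apply CV_plus; [apply IH; intros; apply H; lia|].
  apply CV_mult; [apply CV_const|apply H; lia].
Qed.

Lemma hom_rotation_limit d L h s x : is_hom d L -> has_rot d h s x ->
  Un_cv (fun n => IZR (L (hsum h s n)) / INR n) (Lhat d L x).
Proof.
  intros HL Hrot. apply Un_cv_ext with
    (un := fun n => sum_lt d (fun i => IZR (L (unitZ i)) * (IZR (hsum h s n i) / INR n))).
  - intros n. rewrite (hom_decomp d L _ HL), IZR_sumZ. unfold Rdiv. rewrite Rmult_comm, <- sum_lt_scal.
    apply sum_lt_ext. intros i Hi. rewrite mult_IZR. ring.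
  - apply CV_sum_lt. exact Hrot.
Qed.

Lemma unbounded_of_positive_slope (u : nat -> R) c : Un_cv (fun n => u n / INR n) c -> 0 < c ->
  forall M, exists n, u n > M.
Proof.
  intros Hcv Hc M. destruct (Hcv (c / 2) ltac:(lra)) as [N HN].
  destruct (archimed (2 * Rabs M / c)) as [Har _].
  set (n := (S N + Z.to_nat (up (2 * Rabs M / c)))%nat). exists n.
  specialize (HN n ltac:(unfold n; lia)). unfold R_dist in HN. apply Rabs_def2 in HN as [_ HN].
  assert (Hn : 0 < INR n) by (apply lt_0_INR; unfold n; lia).
  assert (Hbig : 2 * Rabs M / c < INR n).
  { eapply Rlt_le_trans; [exact Har|]. unfold n. rewrite plus_INR, !INR_IZR_INZ.
    assert (Hup : (up (2 * Rabs M / c) <= Z.of_nat (Z.to_nat (up (2 * Rabs M / c))))%Z) by lia.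
    apply IZR_le in Hup. pose proof (pos_INR (S N)). rewrite INR_IZR_INZ in H. lra. }
  assert (Hun : u n > INR n * (c / 2)).
  { replace (u n) with (INR n * (u n / INR n)) by (field; lra). apply Rmult_gt_compat_l; lra. }
  assert (INR n * (c / 2) > Rabs M).
  { unfold Rdiv in Hbig. apply (Rmult_lt_compat_r (c / 2)) in Hbig; [|lra].
    replace (2 * Rabs M * / c * (c / 2)) with (Rabs M) in Hbig by (field; lra). lra. }
  pose proof (Rle_abs M). lra.
Qed.

Lemma surjective_hom_basis d L : is_hom d L -> surjZ L -> exists i, (i < d)%nat /\ L (unitZ i) <> 0%Z.
Proof.
  intros HL HLs. destruct (HLs 1%Z) as [v Hv]. rewrite (hom_decomp d L v HL) in Hv.
  apply NNPP. intros Hn. assert (sumZ d (fun i => (L (unitZ i) * v i)%Z) = 0%Z); [|lia].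
  rewrite (sumZ_ext d _ (fun _ => 0%Z)).
  - clear. induction d; simpl; lia.
  - intros i Hi. assert (L (unitZ i) = 0%Z) by (apply NNPP; intro; apply Hn; exists i; auto).
    rewrite H. lia.
Qed.

Lemma interior_implies_unbounded k A d h : in_interior d (rot_set d k A h) (fun _ => 0) ->
  forall L : vecZ -> Z, is_hom d L -> surjZ L ->
    forall M : Z, exists (s : Z -> nat) (m : nat), inSigma k A s /\ (L (hsum h s m) > M)%Z.
Proof.
  intros [eps [Heps Hint]] L HL HLs M.
  destruct (surjective_hom_basis d L HL HLs) as [i [Hi Hai]].
  set (a := IZR (L (unitZ i))).
  assert (Ha : 0 < a * a) by (assert (a <> 0) by (apply not_0_IZR; auto); nra).
  (* the rotation vector y = del * a * e_i lies in the ball and has Lhat(y) > 0 *)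
  set (del := eps / (2 * (1 + Rabs a))).
  assert (Hdel : 0 < del) by (unfold del; pose proof (Rabs_pos a); apply Rdiv_lt_0_compat; lra).
  set (y := fun j => del * a * IZR (unitZ i j)).
  destruct (Hint y) as [s [HS Hrot]].
  { intros j Hj. unfold y. rewrite Rminus_0_r, !Rabs_mult, (Rabs_right del) by lra.
    assert (Rabs (IZR (unitZ i j)) <= 1)
      by (unfold unitZ; destruct (Nat.eqb j i); rewrite Rabs_Zabs; simpl; lra).
    assert (del * (1 + Rabs a) = eps / 2) by (unfold del; field; pose proof (Rabs_pos a); lra).
    pose proof (Rabs_pos a). pose proof (Rabs_pos (IZR (unitZ i j))). nra. }
  assert (HLy : Lhat d L y = del * a * a) by (unfold y; rewrite Lhat_scaled by auto; reflexivity).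
  destruct (unbounded_of_positive_slope _ _ (hom_rotation_limit d L h s y HL Hrot)
              ltac:(rewrite HLy; nra) (IZR M)) as [n Hn].
  exists s, n. split; auto. apply Z.lt_gt, lt_IZR. lra.
Qed.

Open Scope Z_scope.

Fixpoint dot (d : nat) (u v : vecZ) : Z :=
  match d with O => 0 | S d' => dot d' u v + u d' * v d' end.

Inductive in_cone (vs : list vecZ) : vecZ -> Prop :=
| in_cone_zero : in_cone vs vzero
| in_cone_add_gen : forall v w, In v vs -> in_cone vs w -> in_cone vs (vadd v w).

Definition nonzero (d : nat) (phi : vecZ) : Prop := exists i, (i < d)%nat /\ phi i <> 0.

Definition positively_spanning (d : nat) (vs : list vecZ) : Prop :=
  forall phi, nonzero d phi -> exists v, In v vs /\ dot d phi v > 0.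

Lemma in_cone_add vs u w : in_cone vs u -> in_cone vs w -> in_cone vs (vadd u w).
Proof.
  induction 1 as [|v w0 Hv _ IH]; intros Hw.
  - replace (vadd vzero w) with w by (extensionality i; unfold vadd, vzero; lia). auto.
  - replace (vadd (vadd v w0) w) with (vadd v (vadd w0 w)) by (extensionality i; unfold vadd; lia).
    constructor; auto.
Qed.

Lemma in_cone_nat vs u n : in_cone vs u -> in_cone vs (vscale (Z.of_nat n) u).
Proof.
  intros H. induction n.
  - replace (vscale (Z.of_nat 0) u) with vzero by (extensionality i; unfold vscale, vzero; lia).
    constructor.
  - replace (vscale (Z.of_nat (S n)) u) with (vadd u (vscale (Z.of_nat n) u))
      by (extensionality i; unfold vscale, vadd; lia).
    apply in_cone_add; auto.
Qed.

Lemma in_cone_gen vs v : In v vs -> in_cone vs v.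
Proof.
  intros H. replace v with (vadd v vzero) by (extensionality i; unfold vadd, vzero; lia).
  constructor; auto. constructor.
Qed.

Lemma in_cone_trans vs S u : (forall w, In w S -> in_cone vs w) -> in_cone S u -> in_cone vs u.
Proof. intros HS. induction 1; [constructor|]. apply in_cone_add; auto. Qed.

Lemma in_cone_coord_zero S u c : (forall w, In w S -> w c = 0) -> in_cone S u -> u c = 0.
Proof. intros HS. induction 1; [reflexivity|]. unfold vadd. rewrite HS by auto. lia. Qed.

Lemma dot_ext d u u' v v' : (forall i, (i < d)%nat -> u i = u' i /\ v i = v' i) ->
  dot d u v = dot d u' v'.
Proof.
  induction d; intros H; simpl; [auto|]. rewrite IHd by (intros; apply H; lia).
  destruct (H d ltac:(lia)) as [-> ->]. auto.
Qed.

Lemma dot_scale_l d z u v : dot d (vscale z u) v = z * dot d u v.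
Proof. induction d; simpl; [lia|]. rewrite IHd. unfold vscale. ring. Qed.

Lemma dot_scale_r d z u v : dot d u (vscale z v) = z * dot d u v.
Proof. induction d; simpl; [lia|]. rewrite IHd. unfold vscale. ring. Qed.

Lemma dot_add_r d u v w : dot d u (vadd v w) = dot d u v + dot d u w.
Proof. induction d; simpl; [lia|]. rewrite IHd. unfold vadd. ring. Qed.

Lemma dot_comm d u v : dot d u v = dot d v u.
Proof. induction d; simpl; [auto|]. rewrite IHd. ring. Qed.

Lemma dot_unit d v : dot (S d) (unitZ d) v = v d.
Proof.
  simpl. assert (dot d (unitZ d) v = 0) as ->; [|unfold unitZ; rewrite Nat.eqb_refl; lia].
  assert (forall e, (e <= d)%nat -> dot e (unitZ d) v = 0); [|auto].
  induction e; intros He; simpl; [auto|]. rewrite IHe by lia. unfold unitZ.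
  destruct (Nat.eqb_spec e d); lia.
Qed.

(* One step of Fourier-Motzkin elimination of coordinate d: keep the
   generators with v_d = 0 and add (-q_d) p + p_d q for p_d > 0 > q_d. *)
Definition fm_comb (d : nat) (p q : vecZ) : vecZ := vadd (vscale (- q d) p) (vscale (p d) q).

Definition fm_step (d : nat) (vs : list vecZ) : list vecZ :=
  filter (fun v => Z.eqb (v d) 0) vs ++
  flat_map (fun p => flat_map (fun q =>
    if andb (0 <? p d) (q d <? 0) then [fm_comb d p q] else []) vs) vs.

Lemma fm_step_in d vs w : In w (fm_step d vs) ->
  (In w vs /\ w d = 0) \/
  (exists p q, In p vs /\ In q vs /\ 0 < p d /\ q d < 0 /\ w = fm_comb d p q).
Proof.
  unfold fm_step. intros H. apply in_app_or in H as [H|H].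
  - left. apply filter_In in H as [H1 H2]. apply Z.eqb_eq in H2. auto.
  - right. apply in_flat_map in H as [p [Hp H]]. apply in_flat_map in H as [q [Hq H]].
    destruct (Z.ltb_spec 0 (p d)), (Z.ltb_spec (q d) 0); simpl in H; try tauto.
    destruct H as [<-|[]]. exists p, q. auto.
Qed.

Lemma fm_step_zero d vs v : In v vs -> v d = 0 -> In v (fm_step d vs).
Proof.
  intros H1 H2. unfold fm_step. apply in_or_app. left. apply filter_In. split; auto.
  apply Z.eqb_eq; auto.
Qed.

Lemma fm_step_comb d vs p q : In p vs -> In q vs -> 0 < p d -> q d < 0 ->
  In (fm_comb d p q) (fm_step d vs).
Proof.
  intros. unfold fm_step. apply in_or_app. right. apply in_flat_map. exists p. split; auto.
  apply in_flat_map. exists q. split; auto.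
  destruct (Z.ltb_spec 0 (p d)), (Z.ltb_spec (q d) 0); try lia. simpl; auto.
Qed.

Lemma fm_step_coord d vs w : In w (fm_step d vs) -> w d = 0.
Proof.
  intros H. apply fm_step_in in H as [[_ H]|[p [q [_ [_ [_ [_ ->]]]]]]]; auto.
  unfold fm_comb, vadd, vscale. ring.
Qed.

Lemma fm_step_cone d vs w : In w (fm_step d vs) -> in_cone vs w.
Proof.
  intros H. apply fm_step_in in H as [[H _]|[p [q [Hp [Hq [Hpd [Hqd ->]]]]]]].
  - apply in_cone_gen; auto.
  - unfold fm_comb. replace (- q d) with (Z.of_nat (Z.to_nat (- q d))) by lia.
    replace (p d) with (Z.of_nat (Z.to_nat (p d))) by lia.
    apply in_cone_add; apply in_cone_nat, in_cone_gen; auto.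
Qed.

(* Product of the nonzero |v_d| over vs: a common multiple of these numbers. *)
Fixpoint coord_product (d : nat) (vs : list vecZ) : Z :=
  match vs with
  | [] => 1
  | v :: vs' => if Z.eqb (v d) 0 then coord_product d vs' else Z.abs (v d) * coord_product d vs'
  end.

Lemma coord_product_pos d vs : 0 < coord_product d vs.
Proof. induction vs as [|v vs IH]; simpl; [lia|]. destruct (Z.eqb_spec (v d) 0); lia. Qed.

Lemma coord_product_div d vs v : In v vs -> v d <> 0 -> (v d | coord_product d vs).
Proof.
  induction vs as [|w vs IH]; intros Hin Hne; [destruct Hin|]. simpl.
  destruct Hin as [->|Hin].
  - destruct (Z.eqb_spec (v d) 0); [lia|].
    apply Z.divide_mul_l. apply Z.divide_abs_r. apply Z.divide_refl.
  - destruct (Z.eqb_spec (w d) 0); [auto|]. apply Z.divide_mul_r. auto.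
Qed.

Lemma separating_value (los ups : list Z) : (forall l u, In l los -> In u ups -> l <= u) ->
  exists t, (forall l, In l los -> l <= t) /\ (forall u, In u ups -> t <= u).
Proof.
  intros H. set (m0 := fold_right Z.min 0 ups).
  assert (Hm0 : forall u, In u ups -> m0 <= u).
  { unfold m0. clear. induction ups; intros u Hu; [destruct Hu|]. simpl.
    destruct Hu as [->|Hu]; [lia|]. specialize (IHups u Hu). lia. }
  exists (fold_right Z.max m0 los). split.
  - clear H. induction los; intros l Hl; [destruct Hl|]. simpl.
    destruct Hl as [->|Hl]; [lia|]. specialize (IHlos l Hl). lia.
  - intros u Hu. induction los; simpl; [auto|]. assert (a <= u) by (apply H; simpl; auto).
    assert (fold_right Z.max m0 los <= u) by (apply IHlos; intros; apply H; simpl; auto). lia.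
Qed.

Lemma fm_lift d vs psi : (forall w, In w (fm_step d vs) -> dot d psi w <= 0) ->
  exists N t, 0 < N /\ forall v, In v vs -> N * dot d psi v + t * v d <= 0.
Proof.
  intros Hle. set (N := coord_product d vs). set (av := fun v => dot d psi v).
  assert (HN : 0 < N) by apply coord_product_pos.
  assert (Hdivp : forall p, In p vs -> 0 < p d -> p d * (N / p d) = N).
  { intros p Hp Hpd. destruct (coord_product_div d vs p Hp ltac:(lia)) as [z Hz]. fold N in Hz.
    rewrite Hz, Z.div_mul by lia. ring. }
  assert (Hdivq : forall q, In q vs -> q d < 0 -> (- q d) * (N / (- q d)) = N).
  { intros q Hq Hqd. destruct (coord_product_div d vs q Hq ltac:(lia)) as [z Hz]. fold N in Hz.
    rewrite Hz. replace (z * q d) with ((- z) * (- q d)) by ring. rewrite Z.div_mul by lia. ring. }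
  (* t must lie above the bounds from q_d < 0 and below those from p_d > 0 *)
  set (los := map (fun q => av q * (N / (- q d))) (filter (fun q => q d <? 0) vs)).
  set (ups := map (fun p => - av p * (N / p d)) (filter (fun p => 0 <? p d) vs)).
  destruct (separating_value los ups) as [t [Ht1 Ht2]].
  { intros l u Hl Hu. apply in_map_iff in Hl as [q [<- Hq]]. apply in_map_iff in Hu as [p [<- Hp]].
    apply filter_In in Hq as [Hq Hqd]. apply filter_In in Hp as [Hp Hpd].
    apply Z.ltb_lt in Hqd, Hpd.
    (* the combination of p and q lies in fm_step, so psi is nonpositive on it *)
    pose proof (Hle _ (fm_step_comb d vs p q Hp Hq Hpd Hqd)) as Hc.
    unfold fm_comb in Hc. rewrite dot_add_r, !dot_scale_r in Hc. fold (av p) (av q) in Hc.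
    pose proof (Hdivp p Hp Hpd) as E1. pose proof (Hdivq q Hq Hqd) as E2.
    set (Xp := N / p d) in *. set (Xq := N / - q d) in *. set (cp := p d) in *. set (cq := - q d) in *.
    assert (E : (av q * Xq + av p * Xp) * (cp * cq) = N * (cp * av q + cq * av p)).
    { transitivity (av q * cp * (cq * Xq) + av p * cq * (cp * Xp)); [ring|]. rewrite E1, E2. ring. }
    assert (0 < cp * cq) by nia. assert (N * (cp * av q + cq * av p) <= 0) by nia.
    assert (av q * Xq + av p * Xp <= 0) by nia. lia. }
  exists N, t. split; [exact HN|]. intros v Hv. fold (av v).
  destruct (Z.lt_trichotomy (v d) 0) as [Hvd|[Hvd|Hvd]].
  - assert (av v * (N / - v d) <= t)
      by (apply Ht1, in_map_iff; exists v; split; auto; apply filter_In; split; auto; apply Z.ltb_lt; auto).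
    pose proof (Hdivq v Hv Hvd). nia.
  - rewrite Hvd. pose proof (Hle v (fm_step_zero d vs v Hv Hvd)). unfold av. nia.
  - assert (t <= - av v * (N / v d))
      by (apply Ht2, in_map_iff; exists v; split; auto; apply filter_In; split; auto; apply Z.ltb_lt; auto).
    pose proof (Hdivp v Hv Hvd). nia.
Qed.

Lemma fm_step_spanning d vs : positively_spanning (S d) vs -> positively_spanning d (fm_step d vs).
Proof.
  intros H psi Hpsi. apply NNPP. intros Hn.
  assert (Hle : forall w, In w (fm_step d vs) -> dot d psi w <= 0)
    by (intros w Hw; apply Z.nlt_ge; intro; apply Hn; exists w; split; auto; lia).
  destruct (fm_lift d vs psi Hle) as [N [t [HN Hlift]]].
  set (phi := fun i => if Nat.ltb i d then N * psi i else if Nat.eqb i d then t else 0).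
  assert (Hdphi : forall v, dot (S d) phi v = N * dot d psi v + t * v d).
  { intros v. simpl. unfold phi at 2. rewrite Nat.ltb_irrefl, Nat.eqb_refl.
    rewrite (dot_ext d phi (vscale N psi) v v)
      by (intros i Hi; unfold phi, vscale; destruct (Nat.ltb_spec i d); [auto|lia]).
    rewrite dot_scale_l. auto. }
  destruct (H phi) as [v [Hv Hpos]].
  - destruct Hpsi as [i [Hi Hpi]]. exists i. split; [lia|]. unfold phi.
    destruct (Nat.ltb_spec i d); [nia|lia].
  - rewrite Hdphi in Hpos. specialize (Hlift v Hv). lia.
Qed.

Theorem cone_contains_multiples d vs : positively_spanning d vs -> forall b, exists (M : nat) u,
  (0 < M)%nat /\ in_cone vs u /\ forall i, (i < d)%nat -> u i = Z.of_nat M * b i.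
Proof.
  revert vs. induction d as [|d IH]; intros vs H b.
  - exists 1%nat, vzero. split; [lia|]. split; [constructor|]. intros; lia.
  - (* r in vs has r_d of the sign of b_d; eliminate coordinate d from c b - |b_d| r *)
    destruct (H (unitZ d)) as [p [Hp Hpd]].
    { exists d. split; [lia|]. unfold unitZ. rewrite Nat.eqb_refl. lia. }
    destruct (H (vscale (-1) (unitZ d))) as [q [Hq Hqd]].
    { exists d. split; [lia|]. unfold vscale, unitZ. rewrite Nat.eqb_refl. lia. }
    rewrite dot_unit in Hpd. rewrite dot_scale_l, dot_unit in Hqd.
    set (beta := b d).
    set (r := if Z_le_gt_dec 0 beta then p else q).
    assert (Hr : In r vs) by (unfold r; destruct (Z_le_gt_dec 0 beta); auto).
    set (c := Z.abs (r d)).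
    assert (Hc : 0 < c) by (unfold c, r; destruct (Z_le_gt_dec 0 beta); lia).
    assert (Hcb : c * b d = Z.abs beta * r d)
      by (unfold c, r, beta; destruct (Z_le_gt_dec 0 (b d)); nia).
    set (c0 := fun i => c * b i - Z.abs beta * r i).
    destruct (IH (fm_step d vs) (fm_step_spanning d vs H) c0) as [M0 [u0 [HM0 [Hu0 Hu0i]]]].
    assert (Hu0d : u0 d = 0) by (apply (in_cone_coord_zero (fm_step d vs)); auto; apply fm_step_coord).
    exists (M0 * Z.to_nat c)%nat, (vadd u0 (vscale (Z.of_nat (M0 * Z.to_nat (Z.abs beta))) r)).
    split; [nia|]. split.
    + apply in_cone_add; [apply (in_cone_trans vs (fm_step d vs)); auto; apply fm_step_cone|].
      apply in_cone_nat, in_cone_gen; auto.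
    + intros i Hi. unfold vadd, vscale. rewrite !Nat2Z.inj_mul, !Z2Nat.id by lia.
      destruct (Nat.eq_dec i d) as [->|Hne].
      * rewrite Hu0d. fold beta. nia.
      * rewrite Hu0i by lia. unfold c0. ring.
Qed.

Fixpoint gcd_vec (d : nat) (phi : vecZ) : Z :=
  match d with O => 0 | S d' => Z.gcd (gcd_vec d' phi) (phi d') end.

Lemma gcd_vec_divides d phi i : (i < d)%nat -> (gcd_vec d phi | phi i).
Proof.
  induction d; intros Hi; [lia|]. simpl. destruct (Nat.eq_dec i d) as [->|].
  - apply Z.gcd_divide_r.
  - eapply Z.divide_trans; [apply Z.gcd_divide_l|]. apply IHd; lia.
Qed.

Lemma gcd_vec_pos d phi : nonzero d phi -> 0 < gcd_vec d phi.
Proof.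
  intros [i [Hi Hp]]. assert (0 <= gcd_vec d phi) by (destruct d; simpl; [lia|apply Z.gcd_nonneg]).
  destruct (Z.eq_dec (gcd_vec d phi) 0) as [E|]; [|lia].
  exfalso. destruct (gcd_vec_divides d phi i Hi) as [z Hz]. rewrite E in Hz. lia.
Qed.

Lemma gcd_vec_bezout d phi : exists u, dot d u phi = gcd_vec d phi.
Proof.
  induction d as [|d [u Hu]]; [exists vzero; reflexivity|]. simpl.
  destruct (Zis_gcd_bezout _ _ _ (Zgcd_is_gcd (gcd_vec d phi) (phi d))) as [al be Hab].
  exists (fun i => if Nat.ltb i d then al * u i else if Nat.eqb i d then be else 0).
  rewrite Nat.ltb_irrefl, Nat.eqb_refl.
  rewrite (dot_ext d _ (vscale al u) phi phi)
    by (intros i Hi; unfold vscale; destruct (Nat.ltb_spec i d); [auto|lia]).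
  rewrite dot_scale_l, Hu. lia.
Qed.

Lemma primitive_hom d phi : nonzero d phi -> exists L : vecZ -> Z, is_hom d L /\ surjZ L /\
  forall v, dot d phi v = gcd_vec d phi * L v.
Proof.
  intros Hnz. set (g := gcd_vec d phi). assert (Hg : 0 < g) by (apply gcd_vec_pos; auto).
  set (psi := fun i => phi i / g).
  assert (Hdot : forall v, dot d phi v = g * dot d psi v).
  { intros v. rewrite <- dot_scale_l. apply dot_ext. intros i Hi. unfold vscale, psi. split; [|auto].
    destruct (gcd_vec_divides d phi i Hi) as [z Hz]. fold g in Hz. rewrite Hz, Z.div_mul by lia. ring. }
  exists (fun v => dot d psi v). split; [|split; [|auto]].
  - split; [intros u v H; apply dot_ext; intros i Hi; split; auto|intros u v; apply (dot_add_r d psi u v)].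
  - destruct (gcd_vec_bezout d phi) as [u Hu]. fold g in Hu.
    assert (H1 : dot d psi u = 1).
    { rewrite dot_comm, Hdot in Hu. assert (g * (dot d psi u - 1) = 0) by lia.
      apply Z.mul_eq_0 in H. lia. }
    intros z. exists (vscale z u). rewrite dot_scale_r, H1. lia.
Qed.

Open Scope nat_scope.

Fixpoint walk_check (k : nat) (A : nat -> nat -> bool) (x : nat) (l : list nat) : bool :=
  match l with
  | [] => Nat.ltb x k
  | y :: l' => Nat.ltb x k && A x y && walk_check k A y l'
  end.

Lemma walk_check_spec k A x l : walk_check k A x l = true <-> walk k A x l.
Proof.
  revert x; induction l; intros x; simpl; [apply Nat.ltb_lt|].
  rewrite !andb_true_iff, Nat.ltb_lt, IHl. tauto.
Qed.

Fixpoint all_words (k n : nat) : list (list nat) :=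
  match n with
  | O => [[]]
  | S n' => flat_map (fun l => map (fun x => x :: l) (seq 0 k)) (all_words k n')
  end.

Lemma all_words_complete k l : (forall x, In x l -> x < k) -> In l (all_words k (length l)).
Proof.
  induction l as [|y l IH]; intros H; simpl; [auto|]. apply in_flat_map. exists l. split.
  - apply IH. intros; apply H; simpl; auto.
  - apply in_map_iff. exists y. split; auto. apply in_seq. pose proof (H y (or_introl eq_refl)). lia.
Qed.

Lemma all_words_length k n l : In l (all_words k n) -> length l = n.
Proof.
  revert l; induction n; intros l Hw; simpl in Hw.
  - destruct Hw as [<-|[]]; auto.
  - apply in_flat_map in Hw as [l0 [H0 H1]]. apply in_map_iff in H1 as [z [<- _]].
    simpl. f_equal. auto.
Qed.

Definition short_loops (k : nat) (A : nat -> nat -> bool) : list (nat * list nat) :=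
  flat_map (fun x => flat_map (fun n => map (fun l => (x, l))
    (filter (fun l => walk_check k A x l && Nat.eqb (last l x) x) (all_words k n))) (seq 1 k)) (seq 0 k).

Lemma short_loops_complete k A x l : loop k A x l -> length l <= k -> In (x, l) (short_loops k A).
Proof.
  intros [Hv [Hl Hlast]] Hk. unfold short_loops. apply in_flat_map. exists x. split.
  { apply in_seq. pose proof (walk_start k A x l Hv). lia. }
  apply in_flat_map. exists (length l). split; [apply in_seq; lia|].
  apply in_map_iff. exists l. split; auto. apply filter_In. split.
  - apply all_words_complete, (walk_states k A x l Hv).
  - rewrite andb_true_iff, walk_check_spec, Nat.eqb_eq. auto.
Qed.

Lemma short_loops_sound k A x l : In (x, l) (short_loops k A) -> loop k A x l.
Proof.
  unfold short_loops. intros H. apply in_flat_map in H as [x' [_ H]].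
  apply in_flat_map in H as [n [Hn H]]. apply in_map_iff in H as [l' [E H]].
  inversion E; subst. apply filter_In in H as [Hw H].
  rewrite andb_true_iff, walk_check_spec, Nat.eqb_eq in H. destruct H as [Hv Hlast].
  apply all_words_length in Hw. apply in_seq in Hn. split; [auto|split; [lia|auto]].
Qed.

Definition short_loop_disps k A (h : nat -> nat -> vecZ) : list vecZ :=
  map (fun p => walk_disp h (fst p) (snd p)) (short_loops k A).

Lemma short_loops_spanning k A d h :
  (forall L : vecZ -> Z, is_hom d L -> surjZ L ->
      forall M : Z, exists (s : Z -> nat) (m : nat), inSigma k A s /\ (L (hsum h s m) > M)%Z) ->
  positively_spanning d (short_loop_disps k A h).
Proof.
  intros H phi Hnz. destruct (primitive_hom d phi Hnz) as [L [HL [HLs Hdot]]].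
  destruct (H L HL HLs (Z.of_nat k * weight_bound k (fun u v => L (h u v)))%Z) as [s [m [HS Hgt]]].
  destruct (large_sum_positive_loop k A h d L s m HL HS Hgt) as [y [q [Hq [Hlen Hpos]]]].
  exists (walk_disp h y q). split.
  - apply in_map_iff. exists (y, q). split; auto. apply short_loops_complete; auto.
  - rewrite Hdot, (hom_walk_disp d L) by auto. pose proof (gcd_vec_pos d phi Hnz). nia.
Qed.

Lemma connecting_walk k A : transitive_SFT k A -> forall i j, i < k -> j < k ->
  exists l, walk k A i l /\ 1 <= length l /\ last l i = j.
Proof.
  intros HT i j Hi Hj. destruct (HT i j Hi Hj) as [n [p [Hn [Hp0 [Hpn [Hk HA]]]]]].
  assert (Hpath : forall n' s, s + n' <= n -> walk k A (p s) (map p (seq (S s) n'))).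
  { induction n'; intros s Hs; simpl; [apply Hk; lia|].
    split; [apply Hk; lia|]. split; [apply HA; lia|]. apply IHn'; lia. }
  exists (map p (seq 1 n)). split; [|split].
  - rewrite <- Hp0. apply Hpath. lia.
  - rewrite length_map, length_seq. auto.
  - destruct n; [lia|]. rewrite seq_S, map_app. simpl. rewrite last_last. auto.
Qed.

Lemma finite_choice {X} (x0 : X) n (P : nat -> X -> Prop) : (forall j, j < n -> exists x, P j x) ->
  exists f : nat -> X, forall j, j < n -> P j (f j).
Proof.
  induction n; intros H; [exists (fun _ => x0); intros; lia|].
  destruct IHn as [f Hf]; [intros; apply H; lia|]. destruct (H n ltac:(lia)) as [x Hx].
  exists (fun j => if Nat.eqb j n then x else f j). intros j Hj.
  destruct (Nat.eqb_spec j n) as [->|]; [auto|apply Hf; lia].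
Qed.

Lemma sumZ_plus n f g : sumZ n (fun j => f j + g j)%Z = (sumZ n f + sumZ n g)%Z.
Proof. induction n; simpl; [auto|]. rewrite IHn. lia. Qed.

Lemma sumZ_zero n : sumZ n (fun _ => 0%Z) = 0%Z.
Proof. induction n; simpl; [auto|]. rewrite IHn. lia. Qed.

Lemma sumZ_incr n (c : nat -> nat) J (g : nat -> Z) : J < n ->
  sumZ n (fun j => Z.of_nat (if Nat.eqb j J then S (c j) else c j) * g j)%Z =
  (sumZ n (fun j => Z.of_nat (c j) * g j) + g J)%Z.
Proof.
  induction n; intros H; [lia|]. simpl. destruct (Nat.eqb_spec n J) as [->|Hne].
  - rewrite (sumZ_ext J _ (fun j => Z.of_nat (c j) * g j)%Z); [lia|].
    intros j Hj. destruct (Nat.eqb_spec j J); [lia|auto].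
  - rewrite IHn by lia. lia.
Qed.

Lemma in_cone_counts vs u : in_cone vs u ->
  exists cnt : nat -> nat, forall i,
    u i = sumZ (length vs) (fun j => Z.of_nat (cnt j) * nth j vs vzero i)%Z.
Proof.
  induction 1 as [|v w Hv _ [c Hc]].
  - exists (fun _ => 0). intros i. rewrite (sumZ_ext _ _ (fun _ => 0%Z)) by (intros; lia).
    rewrite sumZ_zero. reflexivity.
  - destruct (In_nth _ _ vzero Hv) as [J [HJ EJ]].
    exists (fun j => if Nat.eqb j J then S (c j) else c j). intros i.
    rewrite sumZ_incr by auto. unfold vadd. rewrite Hc, EJ. lia.
Qed.

(* Gluing loops: the loops of LS are reached from state 0 by the walks g_in
   and left back to 0 by g_out; a detour runs around loop j c times. *)
Definition loop_base (LS : list (nat * list nat)) (j : nat) : nat := fst (nth j LS (0, [])).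
Definition loop_word (LS : list (nat * list nat)) (j : nat) : list nat := snd (nth j LS (0, [])).

Section Gluing.

Variables (k : nat) (A : nat -> nat -> bool) (h : nat -> nat -> vecZ).
Variables (LS : list (nat * list nat)) (g_in g_out : nat -> list nat).
Hypothesis connectors : forall j, j < length LS ->
  loop k A (loop_base LS j) (loop_word LS j) /\
  walk k A 0 (g_in j) /\ 1 <= length (g_in j) /\ last (g_in j) 0 = loop_base LS j /\
  walk k A (loop_base LS j) (g_out j) /\ last (g_out j) (loop_base LS j) = 0.

Definition detour (j c : nat) : list nat := g_in j ++ loop_power (loop_word LS j) c ++ g_out j.

Definition detour_overhead (j : nat) : vecZ :=
  vadd (walk_disp h 0 (g_in j)) (walk_disp h (loop_base LS j) (g_out j)).

Lemma detour_loop j c : j < length LS ->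
  loop k A 0 (detour j c) /\
  walk_disp h 0 (detour j c) =
    vadd (detour_overhead j) (vscale (Z.of_nat c) (walk_disp h (loop_base LS j) (loop_word LS j))).
Proof.
  intros Hj. destruct (connectors j Hj) as [Hl [Hg1 [Hg1l [Hg1e [Hg2 Hg2e]]]]].
  set (x := loop_base LS j) in *. set (l := loop_word LS j) in *.
  assert (Hrl : last (loop_power l c) x = x) by (apply loop_power_last, Hl).
  unfold detour. fold l. split; [split; [|split]|].
  - apply walk_app. split; auto. rewrite Hg1e. apply walk_app.
    split; [apply loop_power_walk; auto|]. rewrite Hrl. auto.
  - rewrite !length_app. lia.
  - rewrite !last_app, Hg1e, Hrl. auto.
  - rewrite !walk_disp_app, Hg1e, Hrl, loop_power_disp by apply Hl.
    extensionality i. unfold detour_overhead, vadd, vscale. fold x l. lia.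
Qed.

Fixpoint tour (n : nat) (cnt : nat -> nat) : list nat :=
  match n with O => [] | S n' => tour n' cnt ++ detour n' (cnt n') end.

Lemma tour_props cnt n : 0 < k -> n <= length LS ->
  walk k A 0 (tour n cnt) /\ last (tour n cnt) 0 = 0 /\ n <= length (tour n cnt) /\
  forall i, walk_disp h 0 (tour n cnt) i =
    (sumZ n (fun j => detour_overhead j i) +
     sumZ n (fun j => Z.of_nat (cnt j) * walk_disp h (loop_base LS j) (loop_word LS j) i))%Z.
Proof.
  intros Hk. induction n; intros Hn.
  - repeat split; simpl; auto; lia.
  - destruct IHn as [H1 [H2 [H3 H4]]]; [lia|].
    destruct (detour_loop n (cnt n) ltac:(lia)) as [[Hd1 [Hd2 Hd3]] Hd4].
    simpl tour. split; [|split; [|split]].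
    + apply walk_app. rewrite H2. auto.
    + rewrite last_app, H2. auto.
    + rewrite length_app. lia.
    + intros i. rewrite walk_disp_app, H2, Hd4. unfold vadd at 1. rewrite H4.
      simpl sumZ. unfold vadd, vscale. ring.
Qed.

End Gluing.

Lemma connectors_exist k A LS : 0 < k -> transitive_SFT k A ->
  (forall j, j < length LS -> loop k A (loop_base LS j) (loop_word LS j)) ->
  exists g_in g_out : nat -> list nat, forall j, j < length LS ->
    loop k A (loop_base LS j) (loop_word LS j) /\
    walk k A 0 (g_in j) /\ 1 <= length (g_in j) /\ last (g_in j) 0 = loop_base LS j /\
    walk k A (loop_base LS j) (g_out j) /\ last (g_out j) (loop_base LS j) = 0.
Proof.
  intros Hk HT HLS.
  destruct (finite_choice ([], []) (length LS) (fun j g =>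
    walk k A 0 (fst g) /\ 1 <= length (fst g) /\ last (fst g) 0 = loop_base LS j /\
    walk k A (loop_base LS j) (snd g) /\ last (snd g) (loop_base LS j) = 0)) as [G HG].
  { intros j Hj. assert (Hx : loop_base LS j < k) by (eapply walk_start; apply HLS; auto).
    destruct (connecting_walk k A HT 0 _ Hk Hx) as [g1 [? [? ?]]].
    destruct (connecting_walk k A HT _ 0 Hx Hk) as [g2 [? [? ?]]].
    exists (g1, g2). simpl. auto. }
  exists (fun j => fst (G j)), (fun j => snd (G j)). intros j Hj. split; [apply HLS; auto|apply HG; auto].
Qed.

Lemma short_loop_counts k A h u : in_cone (short_loop_disps k A h) u ->
  exists cnt : nat -> nat, forall i, u i = sumZ (length (short_loops k A)) (fun j =>
    Z.of_nat (cnt j) * walk_disp h (loop_base (short_loops k A) j) (loop_word (short_loops k A) j) i)%Z.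
Proof.
  intros Hu. destruct (in_cone_counts _ u Hu) as [cnt Hcnt]. exists cnt. intros i.
  rewrite Hcnt. unfold short_loop_disps. rewrite length_map.
  apply sumZ_ext. intros j _. unfold loop_base, loop_word.
  change vzero with ((fun p => walk_disp h (fst p) (snd p)) (0, @nil nat)). rewrite map_nth. reflexivity.
Qed.

(* Under positive spanning, for every b there is a loop at state 0 whose
   displacement is a positive multiple of b: glue the loops of a cone
   representation of M1 b together, and cancel the displacement U of the
   connecting walks with a cone representation of -M2 U. *)
Lemma loop_with_displacement k A h d : 0 < k -> transitive_SFT k A -> 0 < d ->
  positively_spanning d (short_loop_disps k A h) ->
  forall b : vecZ, exists W M, 0 < M /\ loop k A 0 W /\
    forall i, i < d -> walk_disp h 0 W i = (Z.of_nat M * b i)%Z.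
Proof.
  intros Hk HT Hd Hspan b. set (LS := short_loops k A).
  assert (HLS1 : 1 <= length LS).
  { destruct (Hspan (unitZ 0)) as [v [Hv _]]; [exists 0; split; [lia|unfold unitZ; simpl; lia]|].
    unfold short_loop_disps in Hv. apply in_map_iff in Hv as [p [_ Hp]].
    fold LS in Hp. destruct LS; [destruct Hp|simpl; lia]. }
  destruct (connectors_exist k A LS Hk HT) as [g_in [g_out Hconn]].
  { intros j Hj. apply short_loops_sound. unfold loop_base, loop_word.
    rewrite <- surjective_pairing. apply nth_In. auto. }
  set (U := fun i => sumZ (length LS) (fun j => detour_overhead h LS g_in g_out j i)).
  destruct (cone_contains_multiples d _ Hspan b) as [M1 [u1 [HM1 [Hu1 Hu1i]]]].
  destruct (cone_contains_multiples d _ Hspan (vscale (-1) U)) as [M2 [u2 [HM2 [Hu2 Hu2i]]]].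
  destruct (short_loop_counts k A h u1 Hu1) as [n1 Hn1].
  destruct (short_loop_counts k A h u2 Hu2) as [n2 Hn2]. fold LS in Hn1, Hn2.
  set (T1 := tour LS g_in g_out (length LS) (fun j => n1 j + n2 j)).
  set (T0 := tour LS g_in g_out (length LS) (fun _ => 0)).
  destruct (tour_props k A h LS g_in g_out Hconn (fun j => n1 j + n2 j) (length LS) Hk (le_n _))
    as [HT1 [HT1l [HT1n HT1v]]].
  destruct (tour_props k A h LS g_in g_out Hconn (fun _ => 0) (length LS) Hk (le_n _))
    as [HT0 [HT0l [HT0n HT0v]]].
  fold T1 in HT1, HT1l, HT1n, HT1v. fold T0 in HT0, HT0l, HT0n, HT0v.
  exists (T1 ++ loop_power T0 (M2 - 1)), M1. split; auto. split; [split; [|split]|].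
  - apply walk_app. rewrite HT1l. split; auto. apply loop_power_walk. split; auto. split; [lia|auto].
  - rewrite length_app. lia.
  - rewrite last_app, HT1l, loop_power_last; auto.
  - (* U + (M1 b - M2 U) + (M2 - 1) U = M1 b *)
    intros i Hi. rewrite walk_disp_app, HT1l, loop_power_disp by auto. unfold vadd, vscale.
    rewrite HT1v, HT0v.
    change (sumZ (length LS) (fun j => detour_overhead h LS g_in g_out j i)) with (U i).
    set (V := fun j => walk_disp h (loop_base LS j) (loop_word LS j) i).
    change (fun j => Z.of_nat 0 * walk_disp h (loop_base LS j) (loop_word LS j) i)%Z
      with (fun j => Z.of_nat 0 * V j)%Z.
    change (fun j => Z.of_nat (n1 j + n2 j) * walk_disp h (loop_base LS j) (loop_word LS j) i)%Z
      with (fun j => Z.of_nat (n1 j + n2 j) * V j)%Z.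
    rewrite (sumZ_ext (length LS) (fun j => Z.of_nat 0 * V j)%Z (fun _ => 0%Z)), sumZ_zero
      by (intros; lia).
    rewrite (sumZ_ext (length LS) (fun j => Z.of_nat (n1 j + n2 j) * V j)%Z
      (fun j => Z.of_nat (n1 j) * V j + Z.of_nat (n2 j) * V j)%Z)
      by (intros; rewrite Nat2Z.inj_add; ring).
    rewrite sumZ_plus. unfold V. rewrite <- Hn1, <- Hn2, Hu1i, Hu2i by auto. unfold vscale.
    replace (Z.of_nat (M2 - 1)) with (Z.of_nat M2 - 1)%Z by lia. ring.
Qed.

Open Scope R_scope.

(* With a loop Z0 of zero displacement at a, any sub-convex combination
   sum_j lam_j disp(W_j) (with sum_j lam_j |W_j| <= 1) of loops at a is a
   rotation vector: Z0 takes up the remaining weight. *)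
Lemma rotation_with_null_loop k A h d a Z0 m (W : nat -> list nat) (lam : nat -> R) :
  loop k A a Z0 -> (forall i, (i < d)%nat -> walk_disp h a Z0 i = 0%Z) ->
  (forall j, (j < m)%nat -> loop k A a (W j)) -> (forall j, (j < m)%nat -> 0 <= lam j) ->
  sum_lt m (fun j => lam j * INR (length (W j))) <= 1 ->
  rot_set d k A h (fun i => sum_lt m (fun j => lam j * IZR (walk_disp h a (W j) i))).
Proof.
  intros HZ0 HZ0d HW Hlam Hsum.
  set (l0 := INR (length Z0)).
  assert (Hl0 : 0 < l0) by (apply lt_0_INR; destruct HZ0 as [_ [? _]]; lia).
  set (F := fun j => match j with O => Z0 | S i => W i end).
  set (mu := fun j => match j with O => (1 - sum_lt m (fun j => lam j * INR (length (W j)))) / l0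
                                 | S i => lam i end).
  assert (HF : forall j, (j < S m)%nat -> loop k A a (F j))
    by (intros [|j] Hj; [exact HZ0|apply HW; lia]).
  assert (Hmu : forall j, (j < S m)%nat -> 0 <= mu j).
  { intros [|j] Hj; [|apply Hlam; lia]. apply Rmult_le_pos; [lra|apply Rlt_le, Rinv_0_lt_compat; auto]. }
  assert (Hmusum : sum_lt (S m) (fun j => mu j * INR (length (F j))) = 1)
    by (rewrite sum_lt_S; simpl; fold l0; field; lra).
  exists (greedy_point a (S m) (fun j => mu j / sum_lt (S m) mu) F). split.
  - apply (greedy_point_inSigma k A a (S m)); auto; lia.
  - intros i Hi. pose proof (greedy_point_rotation k A h a (S m) F mu ltac:(lia) HF Hmu Hmusum d i Hi) as Hrot.
    assert (E : sum_lt (S m) (fun j => mu j * IZR (walk_disp h a (F j) i)) =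
                sum_lt m (fun j => lam j * IZR (walk_disp h a (W j) i))).
    { rewrite sum_lt_S. change (F 0%nat) with Z0. rewrite HZ0d by auto.
      rewrite Rmult_0_r, Rplus_0_l. reflexivity. }
    cbv beta in Hrot. rewrite E in Hrot. exact Hrot.
Qed.

Lemma rot_set_agree d k A h (x x' : vecR) :
  (forall i, (i < d)%nat -> x i = x' i) -> rot_set d k A h x -> rot_set d k A h x'.
Proof. intros E [s [HS Hr]]. exists s. split; auto. intros i Hi. rewrite <- E by auto. apply Hr; auto. Qed.

Lemma sum_lt_unit d (g : nat -> R) i' : (i' < d)%nat -> sum_lt d (fun i => g i * IZR (unitZ i i')) = g i'.
Proof.
  induction d; intros H; [lia|]. simpl. destruct (Nat.eq_dec i' d) as [->|Hne].
  - rewrite (sum_lt_ext _ _ (fun _ => 0))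
      by (intros; unfold unitZ; destruct (Nat.eqb_spec d j); [lia|]; simpl; lra).
    rewrite sum_lt_const. unfold unitZ. rewrite Nat.eqb_refl. simpl. lra.
  - rewrite IHd by lia. unfold unitZ. destruct (Nat.eqb_spec i' d); [lia|]. simpl. lra.
Qed.

Definition axis_loop k A h d a (i : nat) (sgn : Z) (WM : list nat * nat) : Prop :=
  (0 < snd WM)%nat /\ loop k A a (fst WM) /\
  forall i', (i' < d)%nat -> walk_disp h a (fst WM) i' = (Z.of_nat (snd WM) * (sgn * unitZ i i'))%Z.

Definition sign_of (r : R) : Z := if Rle_dec 0 r then 1%Z else (-1)%Z.

Lemma axis_combination k A h d a (WM : nat -> list nat * nat) (y : vecR) :
  (forall j, (j < d)%nat -> axis_loop k A h d a j (sign_of (y j)) (WM j)) ->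
  forall i, (i < d)%nat ->
    sum_lt d (fun j => Rabs (y j) / INR (snd (WM j)) * IZR (walk_disp h a (fst (WM j)) i)) = y i.
Proof.
  intros HWM i Hi. rewrite <- (sum_lt_unit d y i Hi). apply sum_lt_ext. intros j Hj.
  destruct (HWM j Hj) as [HM [_ Hd]]. rewrite Hd by auto.
  assert (INR (snd (WM j)) <> 0) by (apply not_0_INR; lia).
  rewrite !mult_IZR, <- INR_IZR_INZ. unfold sign_of.
  destruct (Rle_dec 0 (y j)); [rewrite Rabs_right by lra|rewrite Rabs_left by lra]; field; auto.
Qed.

(* If every integer vector has a positive multiple realised as the
   displacement of a loop at a, then 0 is interior to the rotation set: the
   loops for 0 and for +-e_i combine to any y close enough to 0. *)
Lemma interior_of_loop_multiples k A h d a :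
  (forall b : vecZ, exists W M, (0 < M)%nat /\ loop k A a W /\
     forall i, (i < d)%nat -> walk_disp h a W i = (Z.of_nat M * b i)%Z) ->
  in_interior d (rot_set d k A h) (fun _ => 0).
Proof.
  intros Hmult. destruct (Hmult vzero) as [Z0 [M0 [_ [HZ0 HZ0d]]]].
  assert (Haxis : forall sgn, exists f, forall i, (i < d)%nat -> axis_loop k A h d a i sgn (f i)).
  { intros sgn. apply (finite_choice ([], 0%nat) d (fun i WM => axis_loop k A h d a i sgn WM)).
    intros i Hi. destruct (Hmult (vscale sgn (unitZ i))) as [W [M HWM]]. exists (W, M). apply HWM. }
  destruct (Haxis 1%Z) as [Wp HWp]. destruct (Haxis (-1)%Z) as [Wm HWm].
  (* the radius is 1 / (1 + Q), Q bounding the length-to-multiplicity ratios *)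
  set (ratio := fun (WM : list nat * nat) => INR (length (fst WM)) / INR (snd WM)).
  assert (Hratio : forall WM, (0 < snd WM)%nat -> 0 <= ratio WM).
  { intros WM H. apply Rmult_le_pos; [apply pos_INR|apply Rlt_le, Rinv_0_lt_compat, lt_0_INR; auto]. }
  set (Q := sum_lt d (fun i => ratio (Wp i) + ratio (Wm i))).
  assert (HQ : 0 <= Q)
    by (apply sum_lt_nonneg; intros i Hi; pose proof (Hratio _ (proj1 (HWp i Hi)));
        pose proof (Hratio _ (proj1 (HWm i Hi))); lra).
  exists (1 / (1 + Q)). split; [apply Rdiv_lt_0_compat; lra|]. intros y Hy.
  set (WM := fun i => if Rle_dec 0 (y i) then Wp i else Wm i).
  assert (HWM : forall i, (i < d)%nat -> axis_loop k A h d a i (sign_of (y i)) (WM i))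
    by (intros i Hi; unfold WM, sign_of; destruct (Rle_dec 0 (y i)); auto).
  set (lam := fun i => Rabs (y i) / INR (snd (WM i))).
  apply (rot_set_agree d k A h (fun i => sum_lt d (fun j => lam j * IZR (walk_disp h a (fst (WM j)) i)))).
  { apply (axis_combination k A h d a). exact HWM. }
  apply (rotation_with_null_loop k A h d a Z0 d); auto.
  - intros i Hi. rewrite HZ0d by auto. unfold vzero. lia.
  - intros j Hj. apply (HWM j Hj).
  - intros i Hi. apply Rmult_le_pos; [apply Rabs_pos|].
    apply Rlt_le, Rinv_0_lt_compat, lt_0_INR, (HWM i Hi).
  - (* sum_i lam_i |W_i| <= Q / (1 + Q) <= 1 *)
    apply Rle_trans with (sum_lt d (fun i => 1 / (1 + Q) * (ratio (Wp i) + ratio (Wm i)))).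
    + apply sum_lt_le. intros i Hi. specialize (Hy i Hi). rewrite Rminus_0_r in Hy.
      pose proof (Hratio _ (proj1 (HWp i Hi))). pose proof (Hratio _ (proj1 (HWm i Hi))).
      assert (Hr : lam i * INR (length (fst (WM i))) = Rabs (y i) * ratio (WM i))
        by (unfold lam, ratio; field; apply not_0_INR; pose proof (proj1 (HWM i Hi)); lia).
      rewrite Hr. assert (ratio (WM i) <= ratio (Wp i) + ratio (Wm i))
        by (unfold WM; destruct (Rle_dec 0 (y i)); lra).
      pose proof (Rabs_pos (y i)). pose proof (Hratio (WM i) (proj1 (HWM i Hi))). nra.
    + rewrite sum_lt_scal. fold Q. apply (Rmult_le_reg_r (1 + Q)); [lra|]. field_simplify; lra.
Qed.

Lemma unbounded_implies_interior k A d h : (0 < k)%nat -> transitive_SFT k A ->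
  (forall L : vecZ -> Z, is_hom d L -> surjZ L ->
     forall M : Z, exists (s : Z -> nat) (m : nat), inSigma k A s /\ (L (hsum h s m) > M)%Z) ->
  in_interior d (rot_set d k A h) (fun _ => 0).
Proof.
  intros Hk HT Hunb. apply (interior_of_loop_multiples k A h d 0). intros b.
  destruct d as [|d'].
  - (* no coordinates: any loop at 0 will do *)
    destruct (connecting_walk k A HT 0 0 Hk Hk) as [l [Hv [Hl Hlast]]].
    exists l, 1%nat. split; [lia|]. split; [split; auto|]. intros; lia.
  - apply loop_with_displacement; auto; [lia|]. apply short_loops_spanning. exact Hunb.
Qed.

Theorem mainTheorem8 (k : nat) (A : nat -> nat -> bool) (d : nat) (h : nat -> nat -> vecZ) :
  (0 < k)%nat -> transitive_SFT k A ->
  (forall L : vecZ -> Z, is_hom d L -> surjZ L ->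
     exists C : R, C > 0 /\
       (forall (s : Z -> nat) (n : nat), inSigma k A s -> (0 < n)%nat ->
          IZR (L (hsum h s n)) > C ->
          exists (s' : Z -> nat) (n' : nat), inSigma k A s' /\ (0 < n')%nat /\
            periodic s' n' /\ exists x, has_rot d h s' x /\ Lhat d L x > 0) /\
       (forall (s : Z -> nat) (n : nat), inSigma k A s -> (0 < n)%nat ->
          IZR (L (hsum h s n)) < - C ->
          exists s'' : Z -> nat, inSigma k A s'' /\
            exists x, has_rot d h s'' x /\ Lhat d L x < 0)) /\
  (in_interior d (rot_set d k A h) (fun _ => 0) <->
   (forall L : vecZ -> Z, is_hom d L -> surjZ L ->
      forall M : Z, exists (s : Z -> nat) (m : nat), inSigma k A s /\
        (L (hsum h s m) > M)%Z)).
Proof.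
  intros Hk HT. split.
  - intros L HL _. apply threshold_periodic_points; auto.
  - split; [apply interior_implies_unbounded|apply unbounded_implies_interior; auto].
Qed.
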